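(* Assume property (P$_R$) holds with constants $m_b$ and $\theta_R>0$, and $N\ge 2m_b$. Consider the semidiscrete scheme $$J a\,\ddot u=\mathbb D_{jk}(\alpha_{ijik}b)\,u+\mathrm{SAT},$$ $$\mathrm{SAT}=H^{-1}\sum_{f\in F}\big(e_f^T\,b\,D_{\hat n}\big)^T\gamma H_f\,(e_f^Tu-0)\;-\;H^{-1}\sum_{f\in F}e_f\,A\,\gamma\,H_f\,(e_f^Tu-0),$$ where on face $f$ (with its normal $\nu$) $$A=\frac1\gamma\sum_k|\nu_k|\Big(\tau_H\eta_k+\tau_R\frac{\eta_k^2}{(\eta_k)_{\min}}\Big),$$ and $\gamma, b, A$ in the face terms denote diagonal matrices of face values. If $$\tau_H\ge\frac{d}{h\,\theta_H},\qquad \tau_R\ge\frac{1}{h\,\theta_R},$$ then the scheme is stable in the following sense: the quantity $$E_D=E-\langle bD_{\hat n}u,\,u\rangle_{\Gamma',h}+\tfrac12\langle Au,\,u\rangle_{\Gamma',h}$$ satisfies $\frac{dE_D}{dt}=0$ along every solution, and $E_D\ge0$ for all $u,\dot u$.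
   Context: Summation convention: repeated subscript indices are summed from $1$ to $d$ unless ''no sum'' is stated. Every grid function (coefficient) is identified with the diagonal matrix of its grid values. One-dimensional SBP operators: on an equidistant grid of $N$ points with spacing $h$, let $e_\ell=(1,0,\dots,0)^T$, $e_r=(0,\dots,0,1)^T$, $H_\xi = h\,\mathrm{diag}(w_1,\dots,w_s,1,\dots,1,w_s,\dots,w_1)$ with all $w_i>0$, and $\theta_H:=w_1$. $D_\xi$ is an $N\times N$ matrix with $H_\xi D_\xi + D_\xi^T H_\xi = -e_\ell e_\ell^T + e_r e_r^T$; $\hat D_\xi$ is another $N\times N$ matrix and $\Delta D_\xi = D_\xi-\hat D_\xi$. For each grid function $c$, $D_{\xi\xi}(c)$ and $R_{\xi\xi}(c)$ are $N\times N$ matrices with $H_\xi D_{\xi\xi}(c) = -D_\xi^T H_\xi c D_\xi - R_{\xi\xi}(c) - e_\ell c_\ell e_\ell^T \hat D_\xi + e_r c_r e_r^T\hat D_\xi$ ($c_\ell,c_r$ the endpoint values of $c$), where $R_{\xi\xi}(c)$ depends linearly on $c$ and is symmetric positive semidefinite whenever $c\ge 0$ entrywise. Property (P$_R$): for all grid functions $c\ge 0$ on the one-dimensional grid and all $u$, $u^TR_{\xi\xi}(c)u\ge h\theta_R\,c_{\ell,\min}(e_\ell^T\Delta D_\xi u)^2+h\theta_R\,c_{r,\min}(e_r^T\Delta D_\xi u)^2$, where $c_{\ell,\min},c_{r,\min}$ are the minima of $c$ over the $m_b$ leftmost, resp. rightmost, grid points. Multi-dimensional operators: the reference domain $\Omega=[0,1]^d$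 carries the tensor-product grid with $N$ points and spacing $h$ in each direction. $D_i$, $\hat D_i$, $H_i$ are the Kronecker products $I\otimes\cdots\otimes X\otimes\cdots\otimes I$ with $X=D_\xi,\hat D_\xi,H_\xi$ respectively in the $i$th factor; $\Delta D_i=D_i-\hat D_i$; $H=H_\xi\otimes\cdots\otimes H_\xi$ ($d$ factors). For a grid function $c$, $D_{ii}(c)$ (resp. $\widetilde R_{ii}(c)$) applies $D_{\xi\xi}$ (resp. $R_{\xi\xi}$), with $c$ restricted to the line, along every grid line in direction $i$, and $R_{ii}(c)=H_i^{-1}H\widetilde R_{ii}(c)$. Define $\mathbb D_{jk}(c)=D_{jj}(c)$ if $j=k$ and $\mathbb D_{jk}(c)=D_j c D_k$ if $j\ne k$. Faces: $\Gamma_i^-=\{\xi_i=0\}$, $\Gamma_i^+=\{\xi_i=1\}$, $F$ the set of all $2d$ faces. For $f\in F$, $e_f$ is the restriction matrix such that $e_f^Tu$ is the vector of values of $u$ at the grid points of $f$; for $f=\Gamma_i^\pm$, $H_f$ is the Kronecker product of $d-1$ copies of $H_\xi$ (direction $i$ omitted), and $\nu=(\nu_1,\dots,\nu_d)$ is the outward unit normal of $f$ in reference coordinates ($\nu_i=\pm1$, other components $0$). Discrete forms: $\langle u,v\rangle_{\Omega,h}=u^THv$, $\langle u,v\rangle_{\Gamma,h}=\sum_{f\in F}(e_f^Tu)^TH_f(e_f^Tv)$, where in the term for face $f$ every occurrence of $\nu$ or of face-dependent quantities refers to face $f$ (also at edge and corner points); $\|u\|^2_{\Omega,h}=\langle u,u\rangle_{\Omega,h}$,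 $\|u\|^2_{\Gamma,h}=\langle u,u\rangle_{\Gamma,h}$. Geometry and coefficients: a smooth bijection $\vec x(\vec\xi)$ from $\Omega$ onto the physical domain $\Omega'$; $\mathcal J_{ij}=\partial x_j/\partial\xi_i$, $J=\det\mathcal J>0$, $\mathcal K_{ij}=\partial\xi_j/\partial x_i$; $\gamma>0$ on $\partial\Omega$ is defined by $d\Gamma'=\gamma\,d\Gamma$ (surface element ratio); $a>0$, $b>0$ are coefficient functions; all are evaluated at grid points and regarded as diagonal matrices. $\alpha_{ijkl}=\mathcal K_{ij}J\mathcal K_{kl}$. Physical forms: $\langle u,v\rangle_{\Omega',h}=\langle u,Jv\rangle_{\Omega,h}$, $\langle u,v\rangle_{\Gamma',h}=\langle u,\gamma v\rangle_{\Gamma,h}$, with associated squared (semi)norms. $D_{x_i}=\mathcal K_{ij}D_j$. The discrete normal derivative (used at boundary points, face by face) is $D_{\hat n}=\nu_j\frac{\alpha_{ijik}}{\gamma}D_k-\sum_k\nu_k\frac{\alpha_{ikik}}{\gamma}\Delta D_k$. Let $\eta_k=\alpha_{ikik}b$ (sum over $i$, no sum over $k$). At a grid point of a face $\Gamma_k^\pm$, $(\eta_k)_{\min}$ is the minimum of $\eta_k$ over the $m_b$ grid points closest to that face on the grid line in direction $k$ through that point (the term containing it is multiplied by $|\nu_k|$, so it is only needed on faces $\Gamma_k^\pm$). The discrete energy is $$E=\tfrac12\|\sqrt a\,\dot u\|^2_{\Omega',h}+\tfrac12\sum_i\|\sqrt b\,D_{x_i}u\|^2_{\Omega',h}+\tfrac12\sum_k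 u^TR_{kk}(\eta_k)u.$$ All coefficients are time-independent. *)

From Stdlib Require Import Reals.
From mathcomp Require Import all_boot all_fingroup.
Set Implicit Arguments.
Unset Strict Implicit.
Unset Printing Implicit Defensive.
Open Scope R_scope.

(** Grid points of the tensor-product grid on [0,1]^d with N points per direction. *)
Notation pt d N := {ffun 'I_d -> 'I_N}.
(** Faces: (i, false) = Gamma_i^- = {xi_i = 0}, (i, true) = Gamma_i^+ = {xi_i = 1}. *)
Notation face d := ('I_d * bool)%type.

(** 1D norm matrix diagonal: h diag(w_1..w_s,1..1,w_s..w_1). *)
Definition Hxi (N s : nat) (h : R) (w : nat -> R) (i : 'I_N) : R :=
  h * (if (i < s)%N then w i.+1 else if (N - s <= i)%N then w (N - i)%N else 1).

(** (-e_l e_l^T + e_r e_r^T)_{ij} *)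
Definition sbpB (N : nat) (i j : 'I_N) : R :=
  if i == j then
    (if nat_of_ord i == N.-1 then 1 else 0) - (if nat_of_ord i == 0%N then 1 else 0)
  else 0.

Definition mv1 (N : nat) (X : 'I_N -> 'I_N -> R) (u : 'I_N -> R) : 'I_N -> R :=
  fun i => \big[Rplus/0]_(j : 'I_N) (X i j * u j).
Definition quad (T : finType) (M : T -> T -> R) (u : T -> R) : R :=
  \big[Rplus/0]_(p : T) \big[Rplus/0]_(q : T) (u p * M p q * u q).
Definition eL (N : nat) (x : 'I_N -> R) : R :=
  \big[Rplus/0]_(i : 'I_N | nat_of_ord i == 0%N) x i.
Definition eR (N : nat) (x : 'I_N -> R) : R :=
  \big[Rplus/0]_(i : 'I_N | nat_of_ord i == N.-1) x i.

Definition seqmin (s : seq R) : R :=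
  match s with [::] => 0 | x :: s' => foldr Rmin x s' end.
Definition cminL (N mb : nat) (c : 'I_N -> R) : R :=
  seqmin [seq c i | i <- [seq i : 'I_N <- enum 'I_N | (i < mb)%N]].
Definition cminR (N mb : nat) (c : 'I_N -> R) : R :=
  seqmin [seq c i | i <- [seq i : 'I_N <- enum 'I_N | (N - mb <= i)%N]].

Definition detR (d : nat) (M : 'I_d -> 'I_d -> R) : R :=
  \big[Rplus/0]_(s : 'S_d)
     ((if odd_perm s then -1 else 1) * \big[Rmult/1]_(i : 'I_d) M i (s i)).

Definition upd (d N : nat) (p : pt d N) (i : 'I_d) (k : 'I_N) : pt d N :=
  [ffun j => if j == i then k else p j].
Definition sameoff (d N : nat) (i : 'I_d) (p q : pt d N) : bool :=
  [forall j, (j != i) ==> (p j == q j)].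
(** Apply, along every grid line in direction i, a 1D matrix that may depend
    on the line (the line is identified by any of its points). *)
Definition kronL (d N : nat) (i : 'I_d) (X : pt d N -> 'I_N -> 'I_N -> R)
  : pt d N -> pt d N -> R :=
  fun p q => if sameoff i p q then X p (p i) (q i) else 0.
(** I x ... x X x ... x I  (X in the i-th factor). *)
Definition kron1 (d N : nat) (i : 'I_d) (X : 'I_N -> 'I_N -> R) :=
  kronL i (fun _ : pt d N => X).
Definition mv (d N : nat) (M : pt d N -> pt d N -> R) (u : pt d N -> R) : pt d N -> R :=
  fun p => \big[Rplus/0]_(q : pt d N) (M p q * u q).

Definition Hfull (d N : nat) (Hx : 'I_N -> R) (p : pt d N) : R :=
  \big[Rmult/1]_(j : 'I_d) Hx (p j).
(** H_i^{-1} H  (= H_f on faces Gamma_i^\pm) *)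
Definition Hperp (d N : nat) (Hx : 'I_N -> R) (i : 'I_d) (p : pt d N) : R :=
  \big[Rmult/1]_(j : 'I_d | j != i) Hx (p j).

Definition onface (d N : nat) (f : face d) (p : pt d N) : bool :=
  if f.2 then nat_of_ord (p f.1) == N.-1 else nat_of_ord (p f.1) == 0%N.
Definition nu (d : nat) (f : face d) (j : 'I_d) : R :=
  if j == f.1 then (if f.2 then 1 else -1) else 0.

Definition alpha (d N : nat) (K : pt d N -> 'I_d -> 'I_d -> R) (J : pt d N -> R)
  (i j k l : 'I_d) (p : pt d N) : R := K p i j * J p * K p k l.
Definition etaF (d N : nat) (K : pt d N -> 'I_d -> 'I_d -> R) (J b : pt d N -> R)
  (k : 'I_d) (p : pt d N) : R :=
  (\big[Rplus/0]_(i : 'I_d) alpha K J i k i k p) * b p.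
Definition etamin (d N mb : nat) (K : pt d N -> 'I_d -> 'I_d -> R) (J b : pt d N -> R)
  (k : 'I_d) (side : bool) (p : pt d N) : R :=
  (if side then cminR mb else cminL mb) (fun l : 'I_N => etaF K J b k (upd p k l)).

Definition Dx (d N : nat) (D : 'I_N -> 'I_N -> R) (K : pt d N -> 'I_d -> 'I_d -> R)
  (i : 'I_d) (u : pt d N -> R) : pt d N -> R :=
  fun p => \big[Rplus/0]_(j : 'I_d) (K p i j * mv (kron1 j D) u p).

Definition Dn (d N : nat) (D Dh : 'I_N -> 'I_N -> R) (K : pt d N -> 'I_d -> 'I_d -> R)
  (J : pt d N -> R) (gamma : face d -> pt d N -> R) (f : face d)
  : pt d N -> pt d N -> R :=
  fun p q =>
    \big[Rplus/0]_(j : 'I_d) \big[Rplus/0]_(i : 'I_d) \big[Rplus/0]_(k : 'I_d)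
       (nu f j * alpha K J i j i k p / gamma f p * kron1 k D p q)
  - \big[Rplus/0]_(k : 'I_d)
       (nu f k * (\big[Rplus/0]_(i : 'I_d) alpha K J i k i k p) / gamma f p
        * kron1 k (fun x y => D x y - Dh x y) p q).

Definition Apen (d N mb : nat) (tauH tauR : R) (K : pt d N -> 'I_d -> 'I_d -> R)
  (J b : pt d N -> R) (gamma : face d -> pt d N -> R) (f : face d) (p : pt d N) : R :=
  / gamma f p * \big[Rplus/0]_(k : 'I_d)
     (Rabs (nu f k) * (tauH * etaF K J b k p
                       + tauR * (etaF K J b k p) ^ 2 / etamin mb K J b k f.2 p)).

(** D_kk(c) and R_kk(c) = H_k^{-1} H Rtilde_kk(c) *)
Definition Dkk (d N : nat) (Dxx : ('I_N -> R) -> 'I_N -> 'I_N -> R) (k : 'I_d)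
  (c : pt d N -> R) : pt d N -> pt d N -> R :=
  kronL k (fun p => Dxx (fun l => c (upd p k l))).
Definition Rkk (d N : nat) (Hx : 'I_N -> R) (Rxx : ('I_N -> R) -> 'I_N -> 'I_N -> R)
  (k : 'I_d) (c : pt d N -> R) : pt d N -> pt d N -> R :=
  fun p q => Hperp Hx k p * kronL k (fun p => Rxx (fun l => c (upd p k l))) p q.
Definition DDjk (d N : nat) (D : 'I_N -> 'I_N -> R) (Dxx : ('I_N -> R) -> 'I_N -> 'I_N -> R)
  (j k : 'I_d) (c : pt d N -> R) (u : pt d N -> R) : pt d N -> R :=
  if j == k then mv (Dkk Dxx j c) u
  else mv (kron1 j D) (fun p => c p * mv (kron1 k D) u p).

(** Discrete forms: <u, v>_{Omega',h} = <u, J v>_{Omega,h} and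
    <U, V>_{Gamma',h} = <U, gamma V>_{Gamma,h}, face-dependent integrands. *)
Definition ipO (d N : nat) (Hx : 'I_N -> R) (J : pt d N -> R) (u v : pt d N -> R) : R :=
  \big[Rplus/0]_(p : pt d N) (Hfull Hx p * u p * (J p * v p)).
Definition ipG (d N : nat) (Hx : 'I_N -> R) (gamma : face d -> pt d N -> R)
  (U V : face d -> pt d N -> R) : R :=
  \big[Rplus/0]_(f : face d) \big[Rplus/0]_(p : pt d N | onface f p)
     (Hperp Hx f.1 p * U f p * (gamma f p * V f p)).

Definition energy (d N : nat) (Hx : 'I_N -> R) (D : 'I_N -> 'I_N -> R)
  (Rxx : ('I_N -> R) -> 'I_N -> 'I_N -> R) (K : pt d N -> 'I_d -> 'I_d -> R)
  (J a b : pt d N -> R) (u ud : pt d N -> R) : R :=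
  / 2 * ipO Hx J (fun p => sqrt (a p) * ud p) (fun p => sqrt (a p) * ud p)
  + / 2 * \big[Rplus/0]_(i : 'I_d)
            ipO Hx J (fun p => sqrt (b p) * Dx D K i u p) (fun p => sqrt (b p) * Dx D K i u p)
  + / 2 * \big[Rplus/0]_(k : 'I_d) quad (Rkk Hx Rxx k (etaF K J b k)) u.

Definition energyD (d N mb : nat) (tauH tauR : R) (Hx : 'I_N -> R)
  (D Dh : 'I_N -> 'I_N -> R) (Rxx : ('I_N -> R) -> 'I_N -> 'I_N -> R)
  (K : pt d N -> 'I_d -> 'I_d -> R) (J a b : pt d N -> R)
  (gamma : face d -> pt d N -> R) (u ud : pt d N -> R) : R :=
  energy Hx D Rxx K J a b u ud
  - ipG Hx gamma (fun f p => b p * mv (Dn D Dh K J gamma f) u p) (fun _ p => u p)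
  + / 2 * ipG Hx gamma (fun f p => Apen mb tauH tauR K J b gamma f p * u p) (fun _ p => u p).

Definition SAT (d N mb : nat) (tauH tauR : R) (Hx : 'I_N -> R)
  (D Dh : 'I_N -> 'I_N -> R) (K : pt d N -> 'I_d -> 'I_d -> R) (J b : pt d N -> R)
  (gamma : face d -> pt d N -> R) (u : pt d N -> R) : pt d N -> R :=
  fun q => / Hfull Hx q *
   (\big[Rplus/0]_(f : face d) \big[Rplus/0]_(p : pt d N | onface f p)
       ((b p * Dn D Dh K J gamma f p q) * gamma f p * Hperp Hx f.1 p * (u p - 0))
    - \big[Rplus/0]_(f : face d)
       (if onface f q
        then Apen mb tauH tauR K J b gamma f q * gamma f q * Hperp Hx f.1 q * (u q - 0)
        else 0)).

Definition rhs (d N mb : nat) (tauH tauR : R) (Hx : 'I_N -> R)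
  (D Dh : 'I_N -> 'I_N -> R) (Dxx : ('I_N -> R) -> 'I_N -> 'I_N -> R)
  (K : pt d N -> 'I_d -> 'I_d -> R) (J b : pt d N -> R)
  (gamma : face d -> pt d N -> R) (u : pt d N -> R) : pt d N -> R :=
  fun q =>
    \big[Rplus/0]_(j : 'I_d) \big[Rplus/0]_(k : 'I_d)
       DDjk D Dxx j k (fun p => \big[Rplus/0]_(i : 'I_d) (alpha K J i j i k p * b p)) u q
    + SAT mb tauH tauR Hx D Dh K J b gamma u q.

From Pilot Require Import Defs.
From Stdlib Require Import Reals.
From mathcomp Require Import all_boot all_fingroup.
From Stdlib Require Import Lra Psatz FunctionalExtensionality.
From HB Require Import structures.
From mathcomp Require Import zify.
Open Scope R_scope.
Set Warnings "-notation-overridden -redundant-canonical-projection".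

(* Differentiating E_D along a solution and using the
     symmetry of the forms gives  <v, J a z> + (terms linear in v and u).
     Substituting the scheme for J a z, summation by parts along every grid
     line (the SBP property of D_xi and the defining identity of D_xixi(c))
     rewrites the volume operator as minus the gradient and R-energy rates
     plus boundary fluxes, and the SAT terms cancel all boundary fluxes.
   - Nonnegativity.  On each face, -<b D_n u, u> splits into a part
     involving the physical gradient and a part involving Delta D u.  Young's
     inequality bounds both by the penalty 1/2 <A u, u> plus (a) a fraction
     of the gradient energy, absorbed because the boundary weight of H is
     h theta_H and a grid point lies on at most d faces, and (b) a multiple
     of the boundary values of Delta D u, absorbed by property (P_R). *)

Lemma RplusA : associative Rplus. Proof. by move=> x y z; rewrite Rplus_assoc. Qed.
Lemma RmultA : associative Rmult. Proof. by move=> x y z; rewrite Rmult_assoc. Qed.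
HB.instance Definition _ := Monoid.isComLaw.Build R 0 Rplus RplusA Rplus_comm Rplus_0_l.
HB.instance Definition _ := Monoid.isComLaw.Build R 1 Rmult RmultA Rmult_comm Rmult_1_l.
HB.instance Definition _ := Monoid.isMulLaw.Build R 0 Rmult Rmult_0_l Rmult_0_r.
HB.instance Definition _ :=
  Monoid.isAddLaw.Build R Rmult Rplus Rmult_plus_distr_r Rmult_plus_distr_l.

Section Sums.
Variable I : Type.
Implicit Types (r : seq I) (P : pred I) (F G : I -> R).

Lemma sumD r P F G : \big[Rplus/0]_(i <- r | P i) (F i + G i)
  = \big[Rplus/0]_(i <- r | P i) F i + \big[Rplus/0]_(i <- r | P i) G i.
Proof. exact: big_split. Qed.

Lemma sumN r P F : \big[Rplus/0]_(i <- r | P i) (- F i) = - \big[Rplus/0]_(i <- r | P i) F i.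
Proof.
rewrite (big_morph Ropp (id1 := 0) (op1 := Rplus)) //.
  by move=> x y; rewrite Ropp_plus_distr.
by rewrite Ropp_0.
Qed.

Lemma sumB r P F G : \big[Rplus/0]_(i <- r | P i) (F i - G i)
  = \big[Rplus/0]_(i <- r | P i) F i - \big[Rplus/0]_(i <- r | P i) G i.
Proof. by rewrite /Rminus sumD sumN. Qed.

Lemma sumZl r P F a :
  a * \big[Rplus/0]_(i <- r | P i) F i = \big[Rplus/0]_(i <- r | P i) (a * F i).
Proof. exact: big_distrr. Qed.

Lemma sumZr r P F a :
  \big[Rplus/0]_(i <- r | P i) F i * a = \big[Rplus/0]_(i <- r | P i) (F i * a).
Proof. exact: big_distrl. Qed.

Lemma sum_le r P F G : (forall i, P i -> F i <= G i) ->
  \big[Rplus/0]_(i <- r | P i) F i <= \big[Rplus/0]_(i <- r | P i) G i.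
Proof.
move=> H; elim: r => [|x r IH]; rewrite ?big_nil ?big_cons; first lra.
case Px: (P x) => //; have := H x Px; lra.
Qed.

Lemma sum_ge0 r P F : (forall i, P i -> 0 <= F i) -> 0 <= \big[Rplus/0]_(i <- r | P i) F i.
Proof.
move=> H; have := @sum_le r P (fun _ => 0) F H.
by rewrite big1_eq.
Qed.

End Sums.

Lemma sum_prod (I J : Type) (rI : seq I) (rJ : seq J) (P : pred I) (Q : pred J)
    (F : I -> R) (G : J -> R) :
  (\big[Rplus/0]_(i <- rI | P i) F i) * (\big[Rplus/0]_(j <- rJ | Q j) G j) =
  \big[Rplus/0]_(i <- rI | P i) \big[Rplus/0]_(j <- rJ | Q j) (F i * G j).
Proof. rewrite sumZr; apply: eq_bigr => i _; exact: sumZl. Qed.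

Lemma sum_ge0_eq0 (I : finType) (P : pred I) (F : I -> R) :
  (forall i, P i -> 0 <= F i) -> \big[Rplus/0]_(i | P i) F i = 0 -> forall i, P i -> F i = 0.
Proof.
move=> H E i Pi; move: E; rewrite (bigD1 i) //=.
have := @sum_ge0 _ (index_enum I) (fun j => P j && (j != i)) F
  (fun j Pj => H j (proj1 (andP Pj))).
have := H i Pi; lra.
Qed.

Lemma sum_bool (F : bool -> R) : \big[Rplus/0]_(s : bool) F s = F true + F false.
Proof. exact: big_bool. Qed.

Lemma sum_const1 (d : nat) : \big[Rplus/0]_(j : 'I_d) 1 = INR d.
Proof.
rewrite big_const card_ord; elim: d => [|n IH] //=.
rewrite IH; destruct n; simpl; lra.
Qed.

Lemma derivable_pt_lim_sum (I : Type) (s : seq I) (P : pred I) (F : R -> I -> R)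
    (F' : I -> R) t :
  (forall i, derivable_pt_lim (fun r => F r i) t (F' i)) ->
  derivable_pt_lim (fun r => \big[Rplus/0]_(i <- s | P i) F r i) t
    (\big[Rplus/0]_(i <- s | P i) F' i).
Proof.
move=> H; elim: s => [|x s IH].
  have -> : (fun r => \big[Rplus/0]_(i <- [::] | P i) F r i) = (fun _ => 0).
    by apply: functional_extensionality => r; rewrite big_nil.
  rewrite big_nil; exact: derivable_pt_lim_const.
have -> : (fun r => \big[Rplus/0]_(i <- x :: s | P i) F r i) =
  (fun r => (if P x then F r x else 0) + \big[Rplus/0]_(i <- s | P i) F r i).
  apply: functional_extensionality => r; rewrite big_cons.
  by case: (P x) => //; rewrite Rplus_0_l.
rewrite big_cons; case: (P x); first exact: derivable_pt_lim_plus.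
rewrite -[X in derivable_pt_lim _ _ X]Rplus_0_l.
apply: derivable_pt_lim_plus => //; exact: derivable_pt_lim_const.
Qed.

Lemma derivable_pt_lim_eq_val (f : R -> R) t l l' :
  derivable_pt_lim f t l -> l = l' -> derivable_pt_lim f t l'.
Proof. by move=> H <-. Qed.

Section GridLines.
Context {d N : nat}.

Lemma upd_at (p : pt d N) i l : upd p i l i = l.
Proof. by rewrite /upd ffunE eqxx. Qed.
Lemma upd_ne (p : pt d N) i l j : j != i -> upd p i l j = p j.
Proof. by rewrite /upd ffunE => /negbTE ->. Qed.
Lemma upd_id (p : pt d N) i : upd p i (p i) = p.
Proof. by apply/ffunP => j; rewrite /upd ffunE; case: eqP => // ->. Qed.
Lemma upd_upd (p : pt d N) i l l' : upd (upd p i l) i l' = upd p i l'.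
Proof. by apply/ffunP => j; rewrite /upd !ffunE; case: eqP. Qed.

Lemma sameoffP (i : 'I_d) (p q : pt d N) :
  reflect (forall j, j != i -> p j = q j) (sameoff i p q).
Proof.
apply: (iffP forallP) => H j.
  by move=> ji; move: (H j); rewrite ji => /eqP.
by apply/implyP => ji; rewrite (H j ji).
Qed.

Lemma sameoff_upd (p : pt d N) i l : sameoff i p (upd p i l).
Proof. by apply/sameoffP => j ji; rewrite upd_ne. Qed.
Lemma sameoff_sym i (p q : pt d N) : sameoff i p q = sameoff i q p.
Proof. by apply/sameoffP/sameoffP => H j ji; rewrite H. Qed.
Lemma sameoff_eq {i} {p q : pt d N} : sameoff i p q -> q = upd p i (q i).
Proof.
move=> /sameoffP H; apply/ffunP => j; rewrite /upd ffunE; case: eqP => [->//|/eqP ji].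
by rewrite H.
Qed.
Lemma upd_same {i} {p q : pt d N} l : sameoff i p q -> upd p i l = upd q i l.
Proof.
move=> /sameoffP H; apply/ffunP => j; rewrite /upd !ffunE; case: eqP => [//|/eqP ji].
by rewrite H.
Qed.

Lemma Hperp_same (Hx : 'I_N -> R) {i} {p q : pt d N} :
  sameoff i p q -> Hperp Hx i p = Hperp Hx i q.
Proof. by move=> /sameoffP H; apply: eq_bigr => j ji; rewrite H. Qed.
Lemma Hperp_upd (Hx : 'I_N -> R) i (p : pt d N) l : Hperp Hx i (upd p i l) = Hperp Hx i p.
Proof. by rewrite (Hperp_same Hx (sameoff_upd p i l)). Qed.
Lemma Hfull_split (Hx : 'I_N -> R) i (p : pt d N) : Hfull Hx p = Hx (p i) * Hperp Hx i p.
Proof. by rewrite /Hfull (bigD1 i). Qed.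

Lemma line_sum i (p : pt d N) (F : pt d N -> R) :
  \big[Rplus/0]_(q : pt d N) (if sameoff i p q then F q else 0)
  = \big[Rplus/0]_(l : 'I_N) F (upd p i l).
Proof.
have E : forall q, (if sameoff i p q then F q else 0) =
   \big[Rplus/0]_(l : 'I_N) (if q == upd p i l then F q else 0).
  move=> q; case S: (sameoff i p q).
    rewrite (bigD1 (q i)) //= -(sameoff_eq S) eqxx big1 ?Rplus_0_r // => l /negbTE ln.
    case: eqP => // qe; move: ln; rewrite qe upd_at eqxx //.
  rewrite big1 // => l _; case: eqP => // qe; move: S; rewrite qe sameoff_upd //.
rewrite (eq_bigr _ (fun q _ => E q)) exchange_big; apply: eq_bigr => l _.
rewrite (bigD1 (upd p i l)) //= eqxx big1 ?Rplus_0_r // => q /negbTE ->; done.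
Qed.

Lemma mv_kronL i (X : pt d N -> 'I_N -> 'I_N -> R) (u : pt d N -> R) p :
  mv (kronL i X) u p = \big[Rplus/0]_(l : 'I_N) (X p (p i) l * u (upd p i l)).
Proof.
transitivity (\big[Rplus/0]_(l : 'I_N) (X p (p i) (upd p i l i) * u (upd p i l))).
  rewrite /mv /kronL -(line_sum i p (fun q => X p (p i) (q i) * u q)).
  by apply: eq_bigr => q _; case: (sameoff i p q); rewrite ?Rmult_0_l.
by apply: eq_bigr => l _; rewrite upd_at.
Qed.

Lemma mv_kron1 i (X : 'I_N -> 'I_N -> R) (u : pt d N -> R) p :
  mv (kron1 i X) u p = \big[Rplus/0]_(l : 'I_N) (X (p i) l * u (upd p i l)).
Proof. exact: mv_kronL. Qed.

(* Exchanging the point of a line with the position along it (a transpose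
   within each line). *)
Lemma swap_line i (G : pt d N -> 'I_N -> R) :
  \big[Rplus/0]_(p : pt d N) \big[Rplus/0]_(l : 'I_N) G p l
  = \big[Rplus/0]_(p : pt d N) \big[Rplus/0]_(l : 'I_N) G (upd p i l) (p i).
Proof.
transitivity (\big[Rplus/0]_(p : pt d N) \big[Rplus/0]_(q : pt d N)
                (if sameoff i p q then G p (q i) else 0)).
  by apply: eq_bigr => p _; rewrite line_sum; apply: eq_bigr => l _; rewrite upd_at.
rewrite exchange_big; apply: eq_bigr => q _; rewrite -(line_sum i q (fun p => G p (q i))).
by apply: eq_bigr => p _; rewrite sameoff_sym.
Qed.

Lemma sum_by_lines i (F : pt d N -> R) :
  \big[Rplus/0]_(p : pt d N) F p
  = \big[Rplus/0]_(p : pt d N | nat_of_ord (p i) == 0%N)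
      \big[Rplus/0]_(l : 'I_N) F (upd p i l).
Proof.
under [RHS]eq_bigr => p _ do rewrite -(line_sum i p F).
rewrite exchange_big; apply: eq_bigr => r _.
have N0 : (0 < N)%N by apply: leq_ltn_trans (leq0n _) (ltn_ord (r i)).
set z : 'I_N := Ordinal N0.
rewrite (bigD1 (upd r i z)) /=; last by rewrite upd_at.
rewrite sameoff_sym sameoff_upd big1 ?Rplus_0_r // => p /andP [p0 pn].
case S: (sameoff i p r) => //; move: pn.
have Ez : p i = z by apply: val_inj; apply/eqP.
by rewrite -Ez -(upd_same (p i) S) upd_id eqxx.
Qed.

Lemma face_split (F : face d -> R) :
  \big[Rplus/0]_(f : face d) F f = \big[Rplus/0]_(j : 'I_d) \big[Rplus/0]_(s : bool) F (j, s).
Proof. by rewrite pair_big /=; apply: eq_bigr => -[j s]. Qed.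

Lemma Hfull_pos (Hx : 'I_N -> R) : (forall i, 0 < Hx i) -> forall p : pt d N, 0 < Hfull Hx p.
Proof.
move=> HxP p; rewrite /Hfull.
apply: (big_ind (fun x => 0 < x)) => //; [lra | move=> x y; exact: Rmult_lt_0_compat].
Qed.

Lemma Hperp_pos (Hx : 'I_N -> R) : (forall i, 0 < Hx i) ->
  forall j (p : pt d N), 0 < Hperp Hx j p.
Proof.
move=> HxP j p; rewrite /Hperp.
apply: (big_ind (fun x => 0 < x)) => //; [lra | move=> x y; exact: Rmult_lt_0_compat].
Qed.

End GridLines.

(* Summation by parts in one direction j: the SBP property
   H D + D^T H = -e_l e_l^T + e_r e_r^T, applied along every line, moves D_j
   from one factor of the H-inner product to the other at the price of a
   boundary term (the diagonal sbpB is -1, +1 at the two ends, 0 inside). *)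
Section SummationByParts.
Context {d N : nat}.
Variable Hx : 'I_N -> R.
Variable D : 'I_N -> 'I_N -> R.
Hypothesis HD : forall i j : 'I_N, Hx i * D i j + D j i * Hx j = sbpB i j.

Lemma sbpB_line j (p : pt d N) (w : pt d N -> R) :
  \big[Rplus/0]_(l : 'I_N) (sbpB (p j) l * w (upd p j l)) = sbpB (p j) (p j) * w p.
Proof.
rewrite (bigD1 (p j)) //= upd_id big1 ?Rplus_0_r // => l ln.
by rewrite /sbpB eq_sym (negbTE ln) Rmult_0_l.
Qed.

Lemma sbp_direction j (v w : pt d N -> R) :
  \big[Rplus/0]_(p : pt d N) (Hfull Hx p * v p * mv (kron1 j D) w p)
  = - (\big[Rplus/0]_(p : pt d N) (Hfull Hx p * mv (kron1 j D) v p * w p))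
    + (\big[Rplus/0]_(p : pt d N) (Hperp Hx j p * sbpB (p j) (p j) * v p * w p)).
Proof.
transitivity (\big[Rplus/0]_(p : pt d N) \big[Rplus/0]_(l : 'I_N)
   (Hperp Hx j p * v p * (sbpB (p j) l * w (upd p j l))
    - Hperp Hx j p * v p * D l (p j) * Hx l * w (upd p j l))).
  apply: eq_bigr => p _; rewrite mv_kron1 sumZl; apply: eq_bigr => l _.
  rewrite (Hfull_split Hx j p) -(HD (p j) l); set pj := p j; ring.
rewrite Rplus_comm /Rminus; under eq_bigr => p _ do rewrite sumD sumN.
rewrite sumD sumN; congr (_ + - _).
  apply: eq_bigr => p _; rewrite -sumZl sbpB_line; ring.
rewrite (swap_line j (fun p l => Hperp Hx j p * v p * D l (p j) * Hx l * w (upd p j l))).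
apply: eq_bigr => p _; rewrite mv_kron1 sumZl sumZr; apply: eq_bigr => l _.
rewrite Hperp_upd upd_at upd_upd upd_id (Hfull_split Hx j p); set pj := p j; ring.
Qed.

End SummationByParts.

Lemma boundary_as_faces {d N : nat} j (G : pt d N -> R) :
  \big[Rplus/0]_(s : bool) \big[Rplus/0]_(p : pt d N | onface (j, s) p) (nu (j, s) j * G p)
  = \big[Rplus/0]_(p : pt d N) (sbpB (p j) (p j) * G p).
Proof.
rewrite big_bool /= /nu /= eqxx /onface /=.
rewrite !(big_mkcond (fun p => _ == _)) -sumD; apply: eq_bigr => p _.
rewrite /sbpB eqxx; case: (_ == N.-1); case: (_ == 0%N); ring.
Qed.

Section SecondDerivative.
Context {d N : nat}.
Variable Hx : 'I_N -> R.
Variables D Dh : 'I_N -> 'I_N -> R.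
Variables Dxx Rxx : ('I_N -> R) -> 'I_N -> 'I_N -> R.
Hypothesis HDxx : forall (c : 'I_N -> R) (i j : 'I_N),
     Hx i * Dxx c i j =
       - (\big[Rplus/0]_(l : 'I_N) (D l i * Hx l * c l * D l j))
       - Rxx c i j
       - (if nat_of_ord i == 0%N then c i * Dh i j else 0)
       + (if nat_of_ord i == N.-1 then c i * Dh i j else 0).

Lemma mv_Rkk j (c u : pt d N -> R) p :
  mv (Rkk Hx Rxx j c) u p = Hperp Hx j p *
    \big[Rplus/0]_(l : 'I_N) (Rxx (fun m => c (upd p j m)) (p j) l * u (upd p j l)).
Proof.
rewrite -(mv_kronL j (fun p => Rxx (fun m => c (upd p j m)))) /mv sumZl.
by apply: eq_bigr => q _; rewrite /Rkk Rmult_assoc.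
Qed.

Lemma Dkk_pointwise j (c v u : pt d N -> R) p :
  Hfull Hx p * v p * mv (Dkk Dxx j c) u p =
  - (\big[Rplus/0]_(m : 'I_N) \big[Rplus/0]_(l : 'I_N)
       (Hperp Hx j p * v p * D m (p j) * Hx m * c (upd p j m) * D m l * u (upd p j l)))
  - v p * mv (Rkk Hx Rxx j c) u p
  + Hperp Hx j p * sbpB (p j) (p j) * c p * v p * mv (kron1 j Dh) u p.
Proof.
rewrite exchange_big /Dkk mv_kronL mv_Rkk mv_kron1 (Hfull_split Hx j p).
rewrite -sumN !sumZl -sumB -sumD; apply: eq_bigr => l _.
have Hl := HDxx (fun m => c (upd p j m)) (p j) l; simpl in Hl; rewrite upd_id in Hl.
transitivity (Hperp Hx j p * v p * u (upd p j l) *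
              (Hx (p j) * Dxx (fun m => c (upd p j m)) (p j) l)).
  set pj := p j; set X := Dxx _ _ _; set U := u _; set HP := Hperp _ _ _; set V := v p.
  clearbody pj X U HP V; ring.
rewrite Hl.
have ES : \big[Rplus/0]_(m < N)
    (Hperp Hx j p * v p * D m (p j) * Hx m * c (upd p j m) * D m l * u (upd p j l))
  = Hperp Hx j p * v p * u (upd p j l) *
    (\big[Rplus/0]_(m < N) (D m (p j) * Hx m * c (upd p j m) * D m l)).
  rewrite sumZl; apply: eq_bigr => m _; set pj := p j; ring.
rewrite ES /sbpB eqxx.
set pj := p j; set S := \big[Rplus/0]_(m < N) _; set Rl := Rxx _ _ _.
case: (nat_of_ord pj == 0%N); case: (nat_of_ord pj == N.-1); ring.
Qed.

Lemma sbp_second_derivative j (c v u : pt d N -> R) :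
  \big[Rplus/0]_(p : pt d N) (Hfull Hx p * v p * mv (Dkk Dxx j c) u p)
  = - (\big[Rplus/0]_(p : pt d N)
         (Hfull Hx p * c p * mv (kron1 j D) v p * mv (kron1 j D) u p))
    - (\big[Rplus/0]_(p : pt d N) (v p * mv (Rkk Hx Rxx j c) u p))
    + (\big[Rplus/0]_(p : pt d N)
         (Hperp Hx j p * sbpB (p j) (p j) * c p * v p * mv (kron1 j Dh) u p)).
Proof.
rewrite (eq_bigr _ (fun p _ => Dkk_pointwise j c v u p)) sumD sumB sumN.
congr (- _ - _ + _).
pose G p m := \big[Rplus/0]_(l : 'I_N)
  (Hperp Hx j p * v p * D m (p j) * Hx m * c (upd p j m) * D m l * u (upd p j l)).
rewrite (swap_line j G); apply: eq_bigr => p _.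
rewrite /G !mv_kron1 (Hfull_split Hx j p).
set Sv := \big[Rplus/0]_(l < N) (D (p j) l * v (upd p j l)).
set Su := \big[Rplus/0]_(l < N) (D (p j) l * u (upd p j l)).
transitivity (Hx (p j) * Hperp Hx j p * c p * (Sv * Su)); last by set pj := p j; ring.
rewrite /Sv /Su sum_prod sumZl; apply: eq_bigr => m _.
rewrite sumZl; apply: eq_bigr => l _.
rewrite Hperp_upd upd_at !upd_upd upd_id; set pj := p j; ring.
Qed.

End SecondDerivative.

Section MatrixAction.
Context {d N : nat}.

Lemma mv_sum (I : finType) (F : I -> pt d N -> pt d N -> R) u (p : pt d N) :
  mv (fun p q => \big[Rplus/0]_(i : I) F i p q) u p = \big[Rplus/0]_(i : I) mv (F i) u p.
Proof.
rewrite /mv; transitivity (\big[Rplus/0]_(q : pt d N) \big[Rplus/0]_(i : I) (F i p q * u q)).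
  by apply: eq_bigr => q _; rewrite sumZr.
exact: exchange_big.
Qed.

Lemma mv_scal (c : pt d N -> R) M u (p : pt d N) :
  mv (fun p q => c p * M p q) u p = c p * mv M u p.
Proof. by rewrite /mv sumZl; apply: eq_bigr => q _; rewrite Rmult_assoc. Qed.

Lemma mv_sub M1 M2 u (p : pt d N) :
  mv (fun p q => M1 p q - M2 p q) u p = mv M1 u p - mv M2 u p.
Proof. by rewrite /mv -sumB; apply: eq_bigr => q _; ring. Qed.

Lemma mv_kron1_sub j (X Y : 'I_N -> 'I_N -> R) (u : pt d N -> R) p :
  mv (kron1 j (fun x y => X x y - Y x y)) u p = mv (kron1 j X) u p - mv (kron1 j Y) u p.
Proof. by rewrite !mv_kron1 -sumB; apply: eq_bigr => l _; ring. Qed.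

End MatrixAction.

Definition sgn {d : nat} (f : face d) : R := if f.2 then 1 else -1.

Lemma nu_sum {d : nat} (f : face d) (X : 'I_d -> R) :
  \big[Rplus/0]_(j : 'I_d) (nu f j * X j) = sgn f * X f.1.
Proof.
rewrite (bigD1 f.1) //= big1 ?Rplus_0_r; first by rewrite /nu eqxx /sgn.
by move=> j /negbTE jn; rewrite /nu jn Rmult_0_l.
Qed.

Definition cc {d N : nat} (K : pt d N -> 'I_d -> 'I_d -> R) (J b : pt d N -> R)
  (j k : 'I_d) (p : pt d N) : R := \big[Rplus/0]_(i : 'I_d) (alpha K J i j i k p * b p).

Lemma cc_eta {d N : nat} K (J b : pt d N -> R) j : cc K J b j j = etaF K J b j.
Proof. by apply: functional_extensionality => p; rewrite /cc /etaF sumZr. Qed.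

(* On face Gamma_j^{+-}, gamma b D_n u = +-(sum_k c_jk D_k u - c_jj Delta D_j u):
   the weighted normal derivative is the j-th flux with Delta D_j replacing
   D_j in its diagonal part. *)
Lemma Dn_flux {d N : nat} (D Dh : 'I_N -> 'I_N -> R) (K : pt d N -> 'I_d -> 'I_d -> R)
    (J b : pt d N -> R) (gamma : face d -> pt d N -> R) f (u : pt d N -> R) p :
  gamma f p <> 0 ->
  b p * mv (Dn D Dh K J gamma f) u p * gamma f p =
  sgn f * (\big[Rplus/0]_(k : 'I_d) (cc K J b f.1 k p * mv (kron1 k D) u p)
           - cc K J b f.1 f.1 p * mv (kron1 f.1 (fun x y => D x y - Dh x y)) u p).
Proof.
move=> g0.
rewrite /Dn mv_sub !mv_sum.
under eq_bigr => j _ do (rewrite mv_sum; under eq_bigr => i _ do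
  (rewrite mv_sum; under eq_bigr => k _ do rewrite mv_scal)).
under [X in _ - X]eq_bigr => k _ do rewrite mv_scal.
have Efull : \big[Rplus/0]_(j < d) \big[Rplus/0]_(i < d) \big[Rplus/0]_(k < d)
           (nu f j * alpha K J i j i k p / gamma f p * mv (kron1 k D) u p)
   = sgn f * ((\big[Rplus/0]_(k : 'I_d) \big[Rplus/0]_(i : 'I_d)
      (alpha K J i f.1 i k p * mv (kron1 k D) u p)) / gamma f p).
  rewrite -(nu_sum f (fun j => (\big[Rplus/0]_(k : 'I_d) \big[Rplus/0]_(i : 'I_d)
      (alpha K J i j i k p * mv (kron1 k D) u p)) / gamma f p)); apply: eq_bigr => j _.
  rewrite exchange_big /Rdiv sumZr sumZl; apply: eq_bigr => k _.
  rewrite sumZr sumZl; apply: eq_bigr => i _; ring.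
have Ediag : \big[Rplus/0]_(k < d) (nu f k * (\big[Rplus/0]_(i < d) alpha K J i k i k p)
      / gamma f p * mv (kron1 k (fun x y => D x y - Dh x y)) u p)
   = sgn f * ((\big[Rplus/0]_(i : 'I_d) alpha K J i f.1 i f.1 p) / gamma f p
      * mv (kron1 f.1 (fun x y => D x y - Dh x y)) u p).
  rewrite -(nu_sum f (fun k => (\big[Rplus/0]_(i : 'I_d) alpha K J i k i k p) / gamma f p
      * mv (kron1 k (fun x y => D x y - Dh x y)) u p)).
  by apply: eq_bigr => k _; rewrite /Rdiv; ring.
rewrite Efull Ediag /cc.
have Eb : \big[Rplus/0]_(k < d) ((\big[Rplus/0]_(i < d) (alpha K J i f.1 i k p * b p))
      * mv (kron1 k D) u p)
   = b p * \big[Rplus/0]_(k : 'I_d) \big[Rplus/0]_(i : 'I_d)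
       (alpha K J i f.1 i k p * mv (kron1 k D) u p).
  rewrite sumZl; apply: eq_bigr => k _; rewrite sumZr sumZl; apply: eq_bigr => i _; ring.
rewrite Eb -sumZr.
set Sa := \big[Rplus/0]_(k < d) _; set Sb := \big[Rplus/0]_(i < d) _; set M := mv _ u p.
by field.
Qed.

Section TimeDerivatives.
Context {d N : nat}.
Variable t : R.

Lemma derivable_mv (M : pt d N -> pt d N -> R) (u v : R -> pt d N -> R) p :
  (forall q, derivable_pt_lim (fun r => u r q) t (v t q)) ->
  derivable_pt_lim (fun r => mv M (u r) p) t (mv M (v t) p).
Proof.
move=> H; rewrite /mv; apply: derivable_pt_lim_sum => q; exact: derivable_pt_lim_scal.
Qed.

Lemma derivable_Dx D K i (u v : R -> pt d N -> R) p :
  (forall q, derivable_pt_lim (fun r => u r q) t (v t q)) ->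
  derivable_pt_lim (fun r => Defs.Dx D K i (u r) p) t (Defs.Dx D K i (v t) p).
Proof.
move=> H; rewrite /Dx; apply: derivable_pt_lim_sum => j.
apply: derivable_pt_lim_scal; exact: derivable_mv.
Qed.

Lemma derivable_ipO Hx J (F G : R -> pt d N -> R) F' G' :
  (forall p, derivable_pt_lim (fun r => F r p) t (F' p)) ->
  (forall p, derivable_pt_lim (fun r => G r p) t (G' p)) ->
  derivable_pt_lim (fun r => ipO Hx J (F r) (G r)) t
    (ipO Hx J F' (G t) + ipO Hx J (F t) G').
Proof.
move=> HF HG; rewrite /ipO -sumD; apply: derivable_pt_lim_sum => p.
apply: derivable_pt_lim_eq_val.
  apply: derivable_pt_lim_mult; first (apply: derivable_pt_lim_scal; exact: HF).
  apply: derivable_pt_lim_scal; exact: HG.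
cbv beta; ring.
Qed.

Lemma derivable_ipG Hx (gamma : face d -> pt d N -> R) (F G : R -> face d -> pt d N -> R) F' G' :
  (forall f p, derivable_pt_lim (fun r => F r f p) t (F' f p)) ->
  (forall f p, derivable_pt_lim (fun r => G r f p) t (G' f p)) ->
  derivable_pt_lim (fun r => ipG Hx gamma (F r) (G r)) t
    (ipG Hx gamma F' (G t) + ipG Hx gamma (F t) G').
Proof.
move=> HF HG; rewrite /ipG -sumD; apply: derivable_pt_lim_sum => f.
rewrite -sumD; apply: derivable_pt_lim_sum => p.
apply: derivable_pt_lim_eq_val.
  apply: derivable_pt_lim_mult; first (apply: derivable_pt_lim_scal; exact: HF).
  apply: derivable_pt_lim_scal; exact: HG.
cbv beta; ring.
Qed.

Lemma derivable_quad (M : pt d N -> pt d N -> R) (u v : R -> pt d N -> R) :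
  (forall q, derivable_pt_lim (fun r => u r q) t (v t q)) ->
  derivable_pt_lim (fun r => quad M (u r)) t
    (\big[Rplus/0]_(p : pt d N) \big[Rplus/0]_(q : pt d N)
       (v t p * M p q * u t q + u t p * M p q * v t q)).
Proof.
move=> H; rewrite /quad; apply: derivable_pt_lim_sum => p.
apply: derivable_pt_lim_sum => q.
apply: derivable_pt_lim_eq_val.
  apply: derivable_pt_lim_mult; last exact: H.
  apply: derivable_pt_lim_mult; [exact: H | exact: derivable_pt_lim_const].
cbv beta; ring.
Qed.

End TimeDerivatives.

Lemma etaF_ge0 {d N : nat} (K : pt d N -> 'I_d -> 'I_d -> R) (J b : pt d N -> R) :
  (forall p, 0 < J p) -> (forall p, 0 < b p) -> forall k p, 0 <= etaF K J b k p.
Proof.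
move=> HJ Hb k p; rewrite /etaF; apply: Rmult_le_pos; last by have := Hb p; lra.
apply: sum_ge0 => i _; rewrite /alpha.
have := HJ p; set x := K p i k; nra.
Qed.

Lemma ipO_sym {d N : nat} (Hx : 'I_N -> R) (J F G : pt d N -> R) :
  ipO Hx J F G = ipO Hx J G F.
Proof. by apply: eq_bigr => p _; ring. Qed.

Lemma quad_deriv_sym (T : finType) (M : T -> T -> R) (u v : T -> R) :
  (forall p q, M p q = M q p) ->
  \big[Rplus/0]_(p : T) \big[Rplus/0]_(q : T) (v p * M p q * u q + u p * M p q * v q)
  = 2 * \big[Rplus/0]_(p : T) (v p * \big[Rplus/0]_(q : T) (M p q * u q)).
Proof.
move=> Ms.
under eq_bigr => p _ do rewrite sumD.
rewrite sumD.
have -> : \big[Rplus/0]_(p : T) \big[Rplus/0]_(q : T) (u p * M p q * v q)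
   = \big[Rplus/0]_(p : T) \big[Rplus/0]_(q : T) (v p * M p q * u q).
  rewrite exchange_big; apply: eq_bigr => p _; apply: eq_bigr => q _; rewrite Ms; ring.
have -> : \big[Rplus/0]_(p : T) \big[Rplus/0]_(q : T) (v p * M p q * u q)
   = \big[Rplus/0]_(p : T) (v p * \big[Rplus/0]_(q : T) (M p q * u q)).
  by apply: eq_bigr => p _; rewrite sumZl; apply: eq_bigr => q _; ring.
ring.
Qed.

Lemma sum_delta (n : nat) (j : 'I_n) (Y : R) :
  \big[Rplus/0]_(i : 'I_n) (if j == i then Y else 0) = Y.
Proof.
rewrite (bigD1 j) //= eqxx big1 ?Rplus_0_r // => i; rewrite eq_sym => /negbTE ->; done.
Qed.

Section Conservation.
Context {d N : nat}.
Variables (mb : nat) (tauH tauR : R) (Hx : 'I_N -> R).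
Variables D Dh : 'I_N -> 'I_N -> R.
Variables Dxx Rxx : ('I_N -> R) -> 'I_N -> 'I_N -> R.
Variable K : pt d N -> 'I_d -> 'I_d -> R.
Variables J a b : pt d N -> R.
Variable gamma : face d -> pt d N -> R.
Hypothesis HxP : forall i, 0 < Hx i.
Hypothesis HD : forall i j : 'I_N, Hx i * D i j + D j i * Hx j = sbpB i j.
Hypothesis HDxx : forall (c : 'I_N -> R) (i j : 'I_N),
     Hx i * Dxx c i j =
       - (\big[Rplus/0]_(l : 'I_N) (D l i * Hx l * c l * D l j))
       - Rxx c i j
       - (if nat_of_ord i == 0%N then c i * Dh i j else 0)
       + (if nat_of_ord i == N.-1 then c i * Dh i j else 0).
Hypothesis HRsym :
  forall c : 'I_N -> R, (forall l, 0 <= c l) -> forall i j, Rxx c i j = Rxx c j i.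
Hypothesis HJ : forall p, 0 < J p.
Hypothesis Ha : forall p, 0 < a p.
Hypothesis Hb : forall p, 0 < b p.
Hypothesis Hg : forall f p, onface f p -> 0 < gamma f p.

Definition grad_pairing (u v : pt d N -> R) (j k : 'I_d) := \big[Rplus/0]_(p : pt d N)
  (Hfull Hx p * mv (kron1 j D) v p * (cc K J b j k p * mv (kron1 k D) u p)).
Definition flux_boundary (u v : pt d N -> R) (j k : 'I_d) := \big[Rplus/0]_(p : pt d N)
  (sbpB (p j) (p j) * (Hperp Hx j p * v p * (cc K J b j k p * mv (kron1 k D) u p))).
Definition R_pairing (u v : pt d N -> R) (j : 'I_d) := \big[Rplus/0]_(p : pt d N)
  (v p * mv (Rkk Hx Rxx j (etaF K J b j)) u p).
Definition Dh_boundary (u v : pt d N -> R) (j : 'I_d) := \big[Rplus/0]_(p : pt d N)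
  (sbpB (p j) (p j) * (Hperp Hx j p * v p * (cc K J b j j p * mv (kron1 j Dh) u p))).

Lemma Rkk_sym k (p q : pt d N) :
  Rkk Hx Rxx k (etaF K J b k) p q = Rkk Hx Rxx k (etaF K J b k) q p.
Proof.
rewrite /Rkk /kronL sameoff_sym; case S: (sameoff k q p); last by rewrite !Rmult_0_r.
rewrite (Hperp_same Hx S).
have -> : (fun l => etaF K J b k (upd p k l)) = (fun l => etaF K J b k (upd q k l)).
  by apply: functional_extensionality => l; rewrite (upd_same l S).
by rewrite HRsym // => l; exact: etaF_ge0.
Qed.

Lemma kinetic_pairing (v z : pt d N -> R) :
  ipO Hx J (fun p => sqrt (a p) * z p) (fun p => sqrt (a p) * v p)
  = \big[Rplus/0]_(p : pt d N) (Hfull Hx p * v p * (J p * a p * z p)).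
Proof.
apply: eq_bigr => p _.
have E := sqrt_sqrt (a p) (Rlt_le _ _ (Ha p)).
transitivity (Hfull Hx p * v p * J p * z p * (sqrt (a p) * sqrt (a p))); first ring.
rewrite E; ring.
Qed.

Lemma gradient_pairing_expand (u v : pt d N -> R) :
  \big[Rplus/0]_(i : 'I_d) ipO Hx J (fun p => sqrt (b p) * Defs.Dx D K i v p)
                                   (fun p => sqrt (b p) * Defs.Dx D K i u p)
  = \big[Rplus/0]_(j : 'I_d) \big[Rplus/0]_(k : 'I_d) grad_pairing u v j k.
Proof.
rewrite /grad_pairing /ipO exchange_big.
under [RHS]eq_bigr => j _ do rewrite exchange_big.
rewrite [RHS]exchange_big; apply: eq_bigr => p _.
have E := sqrt_sqrt (b p) (Rlt_le _ _ (Hb p)).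
transitivity (\big[Rplus/0]_(i : 'I_d) \big[Rplus/0]_(j : 'I_d) \big[Rplus/0]_(k : 'I_d)
   (Hfull Hx p * J p * b p * (K p i j * mv (kron1 j D) v p)
    * (K p i k * mv (kron1 k D) u p))).
  apply: eq_bigr => i _; rewrite /Defs.Dx.
  set Sv := \big[Rplus/0]_(j < d) _; set Su := \big[Rplus/0]_(j < d) _.
  transitivity (Hfull Hx p * J p * (sqrt (b p) * sqrt (b p)) * (Sv * Su)); first ring.
  rewrite E /Sv /Su sum_prod sumZl; apply: eq_bigr => j _.
  rewrite sumZl; apply: eq_bigr => k _; ring.
rewrite [LHS]exchange_big; apply: eq_bigr => j _.
rewrite [LHS]exchange_big; apply: eq_bigr => k _.
set x := mv (kron1 j D) v p; set y := mv (kron1 k D) u p.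
rewrite [in RHS]/cc [in RHS]sumZr [in RHS]sumZl; apply: eq_bigr => i _; rewrite /alpha; ring.
Qed.

Lemma normal_flux_pairing (u v : pt d N -> R) :
  ipG Hx gamma (fun f p => b p * mv (Dn D Dh K J gamma f) u p) (fun _ p => v p)
  = \big[Rplus/0]_(j : 'I_d) \big[Rplus/0]_(p : pt d N)
      (sbpB (p j) (p j) * (Hperp Hx j p * v p *
        (\big[Rplus/0]_(k : 'I_d) (cc K J b j k p * mv (kron1 k D) u p)
         - cc K J b j j p * mv (kron1 j (fun x y => D x y - Dh x y)) u p))).
Proof.
rewrite /ipG face_split; apply: eq_bigr => j _.
rewrite -boundary_as_faces; apply: eq_bigr => s _; apply: eq_bigr => p Hp.
have g0 : gamma (j, s) p <> 0 by have := Hg (j, s) p Hp; lra.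
transitivity (Hperp Hx j p * v p *
              (b p * mv (Dn D Dh K J gamma (j, s)) u p * gamma (j, s) p)).
  rewrite /=; ring.
rewrite Dn_flux //= /nu eqxx /sgn /=.
set A := \big[Rplus/0]_(k < d) _; set B := mv _ u p; ring.
Qed.

Lemma SAT_pairing (u v : pt d N -> R) :
  \big[Rplus/0]_(p : pt d N) (Hfull Hx p * v p * SAT mb tauH tauR Hx D Dh K J b gamma u p)
  = ipG Hx gamma (fun f p => b p * mv (Dn D Dh K J gamma f) v p) (fun _ p => u p)
    - ipG Hx gamma (fun f p => Apen mb tauH tauR K J b gamma f p * u p) (fun _ p => v p).
Proof.
transitivity (\big[Rplus/0]_(q : pt d N) (v q *
   (\big[Rplus/0]_(f : face d) \big[Rplus/0]_(p : pt d N | onface f p)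
       ((b p * Dn D Dh K J gamma f p q) * gamma f p * Hperp Hx f.1 p * (u p - 0))))
  - \big[Rplus/0]_(q : pt d N) (v q * \big[Rplus/0]_(f : face d)
       (if onface f q
        then Apen mb tauH tauR K J b gamma f q * gamma f q * Hperp Hx f.1 q * (u q - 0)
        else 0))).
  rewrite -sumB; apply: eq_bigr => q _; rewrite /SAT.
  have H0 := Hfull_pos Hx HxP q.
  set A := \big[Rplus/0]_(f : face d) _; set B := \big[Rplus/0]_(f : face d) _.
  field; lra.
congr (_ - _).
  rewrite /ipG; under eq_bigr => q _ do rewrite sumZl.
  rewrite exchange_big; apply: eq_bigr => f _.
  under eq_bigr => q _ do rewrite sumZl.
  rewrite exchange_big; apply: eq_bigr => p _; rewrite /mv.
  transitivity ((Hperp Hx f.1 p * b p * (gamma f p * u p)) *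
                \big[Rplus/0]_(q : pt d N) (Dn D Dh K J gamma f p q * v q)).
    rewrite sumZl; apply: eq_bigr => q _.
    set HP := Hperp _ _ _; set DN := Dn _ _ _ _ _ _ _ _; set G := gamma _ _; ring.
  set HP := Hperp _ _ _; set S := \big[Rplus/0]_(q : pt d N) _; ring.
rewrite /ipG; under eq_bigr => q _ do rewrite sumZl.
rewrite exchange_big; apply: eq_bigr => f _.
rewrite [RHS]big_mkcond; apply: eq_bigr => q _.
case: (onface f q); ring.
Qed.

Lemma volume_pairing_jk (u v : pt d N -> R) (j k : 'I_d) :
  \big[Rplus/0]_(p : pt d N) (Hfull Hx p * v p * DDjk D Dxx j k (cc K J b j k) u p)
  = - grad_pairing u v j k + flux_boundary u v j k
    - (if j == k then R_pairing u v j + flux_boundary u v j j - Dh_boundary u v j else 0).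
Proof.
rewrite /DDjk; case: eqP => [<-|/eqP jk].
  rewrite (sbp_second_derivative _ _ _ _ _ HDxx) cc_eta.
  rewrite /R_pairing /grad_pairing /Dh_boundary /flux_boundary.
  set R0 := \big[Rplus/0]_(p : pt d N) (v p * _).
  have -> : \big[Rplus/0]_(p : pt d N)
      (Hfull Hx p * etaF K J b j p * mv (kron1 j D) v p * mv (kron1 j D) u p)
    = \big[Rplus/0]_(p : pt d N)
      (Hfull Hx p * mv (kron1 j D) v p * (cc K J b j j p * mv (kron1 j D) u p)).
    apply: eq_bigr => p _; rewrite cc_eta; set x := mv _ v p; set y := mv _ u p; ring.
  have -> : \big[Rplus/0]_(p : pt d N)
      (Hperp Hx j p * sbpB (p j) (p j) * etaF K J b j p * v p * mv (kron1 j Dh) u p)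
    = \big[Rplus/0]_(p : pt d N)
      (sbpB (p j) (p j) * (Hperp Hx j p * v p * (cc K J b j j p * mv (kron1 j Dh) u p))).
    apply: eq_bigr => p _; rewrite cc_eta; set x := mv _ u p; set y := sbpB _ _; ring.
  set X1 := \big[Rplus/0]_(p : pt d N) (Hfull Hx p * _ * _).
  set B1 := \big[Rplus/0]_(p : pt d N) (sbpB _ _ * (_ * _ * (_ * mv (kron1 j D) u p))).
  set B2 := \big[Rplus/0]_(p : pt d N) (sbpB _ _ * _).
  ring.
rewrite (sbp_direction _ _ HD) Rminus_0_r /grad_pairing /flux_boundary.
congr (- _ + _).
by apply: eq_bigr => p _; set x := mv _ u p; set y := sbpB _ _; ring.
Qed.

Lemma volume_pairing (u v : pt d N -> R) :
  \big[Rplus/0]_(p : pt d N) (Hfull Hx p * v p *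
     \big[Rplus/0]_(j : 'I_d) \big[Rplus/0]_(k : 'I_d)
       DDjk D Dxx j k (fun p => \big[Rplus/0]_(i : 'I_d) (alpha K J i j i k p * b p)) u p)
  = - (\big[Rplus/0]_(j : 'I_d) \big[Rplus/0]_(k : 'I_d) grad_pairing u v j k)
    - (\big[Rplus/0]_(j : 'I_d) R_pairing u v j)
    + ipG Hx gamma (fun f p => b p * mv (Dn D Dh K J gamma f) u p) (fun _ p => v p).
Proof.
transitivity (\big[Rplus/0]_(j : 'I_d) \big[Rplus/0]_(k : 'I_d)
   (\big[Rplus/0]_(p : pt d N) (Hfull Hx p * v p * DDjk D Dxx j k (cc K J b j k) u p))).
  under [RHS]eq_bigr => j _ do rewrite exchange_big.
  rewrite [RHS]exchange_big; apply: eq_bigr => p _.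
  rewrite sumZl; apply: eq_bigr => j _; rewrite sumZl; by apply: eq_bigr => k _.
rewrite normal_flux_pairing -sumN -sumB -sumD; apply: eq_bigr => j _.
under eq_bigr => k _ do rewrite volume_pairing_jk.
rewrite sumB sumD sumN sum_delta.
set SX := \big[Rplus/0]_(k < d) grad_pairing u v j k.
set SB := \big[Rplus/0]_(k < d) flux_boundary u v j k.
transitivity (- SX - R_pairing u v j + (SB - flux_boundary u v j j + Dh_boundary u v j)).
  ring.
congr (_ + _).
rewrite /flux_boundary /Dh_boundary.
rewrite [X in X - _ + _]exchange_big -sumB -sumD; apply: eq_bigr => p _.
rewrite mv_kron1_sub.
set s := sbpB _ _; set HP := Hperp _ _ _.
set x := mv (kron1 j D) u p; set y := mv (kron1 j Dh) u p.
have -> : \big[Rplus/0]_(k < d) (s * (HP * v p * (cc K J b j k p * mv (kron1 k D) u p)))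
  = s * (HP * v p * \big[Rplus/0]_(k < d) (cc K J b j k p * mv (kron1 k D) u p)).
  by rewrite !sumZl.
set S := \big[Rplus/0]_(k < d) _; set c := cc K J b j j p; ring.
Qed.

Lemma energy_rate_identity (u v z : pt d N -> R) :
  (forall p, J p * a p * z p = rhs mb tauH tauR Hx D Dh Dxx K J b gamma u p) ->
  / 2 * (ipO Hx J (fun p => sqrt (a p) * z p) (fun p => sqrt (a p) * v p)
         + ipO Hx J (fun p => sqrt (a p) * v p) (fun p => sqrt (a p) * z p))
  + / 2 * \big[Rplus/0]_(i : 'I_d)
      (ipO Hx J (fun p => sqrt (b p) * Defs.Dx D K i v p)
                (fun p => sqrt (b p) * Defs.Dx D K i u p)
       + ipO Hx J (fun p => sqrt (b p) * Defs.Dx D K i u p)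
                  (fun p => sqrt (b p) * Defs.Dx D K i v p))
  + / 2 * \big[Rplus/0]_(k : 'I_d) \big[Rplus/0]_(p : pt d N) \big[Rplus/0]_(q : pt d N)
      (v p * Rkk Hx Rxx k (etaF K J b k) p q * u q
       + u p * Rkk Hx Rxx k (etaF K J b k) p q * v q)
  - (ipG Hx gamma (fun f p => b p * mv (Dn D Dh K J gamma f) v p) (fun _ p => u p)
     + ipG Hx gamma (fun f p => b p * mv (Dn D Dh K J gamma f) u p) (fun _ p => v p))
  + / 2 * (ipG Hx gamma (fun f p => Apen mb tauH tauR K J b gamma f p * v p) (fun _ p => u p)
           + ipG Hx gamma (fun f p => Apen mb tauH tauR K J b gamma f p * u p)
                 (fun _ p => v p))
  = 0.
Proof.
move=> Hz.
rewrite [ipO Hx J (fun p => sqrt (a p) * v p) _]ipO_sym kinetic_pairing.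
have -> : \big[Rplus/0]_(i : 'I_d)
      (ipO Hx J (fun p => sqrt (b p) * Defs.Dx D K i v p)
                (fun p => sqrt (b p) * Defs.Dx D K i u p)
       + ipO Hx J (fun p => sqrt (b p) * Defs.Dx D K i u p)
                  (fun p => sqrt (b p) * Defs.Dx D K i v p))
  = 2 * \big[Rplus/0]_(i : 'I_d)
      ipO Hx J (fun p => sqrt (b p) * Defs.Dx D K i v p)
               (fun p => sqrt (b p) * Defs.Dx D K i u p).
  rewrite sumZl; apply: eq_bigr => i _.
  by rewrite [ipO Hx J (fun p => sqrt (b p) * Defs.Dx D K i u p) _]ipO_sym; ring.
rewrite gradient_pairing_expand.
have -> : \big[Rplus/0]_(k : 'I_d) \big[Rplus/0]_(p : pt d N) \big[Rplus/0]_(q : pt d N)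
      (v p * Rkk Hx Rxx k (etaF K J b k) p q * u q
       + u p * Rkk Hx Rxx k (etaF K J b k) p q * v q)
  = 2 * \big[Rplus/0]_(j : 'I_d) R_pairing u v j.
  rewrite sumZl; apply: eq_bigr => k _.
  by rewrite (@quad_deriv_sym _ _ u v (Rkk_sym k)).
have -> : ipG Hx gamma (fun f p => Apen mb tauH tauR K J b gamma f p * v p) (fun _ p => u p)
   = ipG Hx gamma (fun f p => Apen mb tauH tauR K J b gamma f p * u p) (fun _ p => v p).
  apply: eq_bigr => f _; apply: eq_bigr => p _; ring.
have -> : \big[Rplus/0]_(p : pt d N) (Hfull Hx p * v p * (J p * a p * z p))
   = \big[Rplus/0]_(p : pt d N) (Hfull Hx p * v p *
     \big[Rplus/0]_(j : 'I_d) \big[Rplus/0]_(k : 'I_d)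
       DDjk D Dxx j k (fun p => \big[Rplus/0]_(i : 'I_d) (alpha K J i j i k p * b p)) u p)
   + \big[Rplus/0]_(p : pt d N) (Hfull Hx p * v p * SAT mb tauH tauR Hx D Dh K J b gamma u p).
  by rewrite -sumD; apply: eq_bigr => p _; rewrite Hz /rhs Rmult_plus_distr_l.
rewrite volume_pairing SAT_pairing.
set X := \big[Rplus/0]_(j : 'I_d) _.
set Rs := \big[Rplus/0]_(j : 'I_d) R_pairing u v j.
set G1 := ipG Hx gamma (fun f p => b p * mv _ u p) _.
set G2 := ipG Hx gamma (fun f p => b p * mv _ v p) _.
set GA := ipG Hx gamma _ _.
lra.
Qed.

Lemma energyD_conserved (u v z : R -> pt d N -> R) :
  (forall t p, derivable_pt_lim (fun r => u r p) t (v t p)) ->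
  (forall t p, derivable_pt_lim (fun r => v r p) t (z t p)) ->
  (forall t p, J p * a p * z t p = rhs mb tauH tauR Hx D Dh Dxx K J b gamma (u t) p) ->
  forall t, derivable_pt_lim
     (fun r => energyD mb tauH tauR Hx D Dh Rxx K J a b gamma (u r) (v r)) t 0.
Proof.
move=> Hu Hv Hz t.
rewrite /energyD /energy.
eapply derivable_pt_lim_eq_val.
{ apply: derivable_pt_lim_plus; first apply: derivable_pt_lim_minus;
    first apply: derivable_pt_lim_plus; first apply: derivable_pt_lim_plus.
  - apply: derivable_pt_lim_scal; apply: derivable_ipO => p;
      apply: derivable_pt_lim_scal; exact: Hv.
  - apply: derivable_pt_lim_scal; apply: derivable_pt_lim_sum => i.
    apply: derivable_ipO => p; apply: derivable_pt_lim_scal; exact: derivable_Dx.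
  - apply: derivable_pt_lim_scal; apply: derivable_pt_lim_sum => k; exact: derivable_quad.
  - apply: derivable_ipG => f p; last exact: Hu.
    apply: derivable_pt_lim_scal; exact: derivable_mv.
  - apply: derivable_pt_lim_scal; apply: derivable_ipG => f p; last exact: Hu.
    apply: derivable_pt_lim_scal; exact: Hu. }
cbv beta; apply: energy_rate_identity; exact: Hz.
Qed.

End Conservation.

Arguments energyD_conserved {d N mb tauH tauR Hx D Dh Dxx Rxx K J a b gamma}.

(* Minima over nonempty lists of positive reals are positive; this makes
   (eta_k)_min a legitimate denominator in the penalty. *)
Lemma seqmin_pos (s : seq R) :
  s <> [::] -> (forall x, List.In x s -> 0 < x) -> 0 < seqmin s.
Proof.
case: s => [//|x s] _ H /=.
have Hx : 0 < x by apply: H; left.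
have Hs : forall y, List.In y s -> 0 < y by move=> y Hy; apply: H; right.
clear H; elim: s Hs => [|y s IH] Hs //=.
apply: Rmin_glb_lt; first by apply: Hs; left.
by apply: IH => z Hz; apply: Hs; right.
Qed.

Lemma in_map_filter (N : nat) (c : 'I_N -> R) (P : pred 'I_N) x :
  List.In x [seq c i | i <- [seq i : 'I_N <- enum 'I_N | P i]] -> exists i, x = c i.
Proof.
elim: (enum 'I_N) => [|y s IH] //=.
case: (P y) => //= -[<-|H]; [by exists y | exact: IH].
Qed.

Lemma map_filter_nonnil (N : nat) (c : 'I_N -> R) (P : pred 'I_N) (z : 'I_N) :
  P z -> [seq c i | i <- [seq i : 'I_N <- enum 'I_N | P i]] <> [::].
Proof.
move=> Pz E.
have : z \in [seq i : 'I_N <- enum 'I_N | P i] by rewrite mem_filter Pz mem_enum.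
by case: [seq i : 'I_N <- enum 'I_N | P i] E.
Qed.

Lemma eL_at (N : nat) (z : 'I_N) (x : 'I_N -> R) : nat_of_ord z = 0%N -> eL x = x z.
Proof.
move=> Hz; rewrite /eL (big_pred1 z) // => i /=.
by apply/eqP/eqP => [H|->]; [apply: val_inj; rewrite /= H Hz | ].
Qed.

Lemma eR_at (N : nat) (z : 'I_N) (x : 'I_N -> R) : nat_of_ord z = N.-1 -> eR x = x z.
Proof.
move=> Hz; rewrite /eR (big_pred1 z) // => i /=.
by apply/eqP/eqP => [H|->]; [apply: val_inj; rewrite /= H Hz | ].
Qed.

Lemma young_signed (s u K g e : R) : s * s = 1 -> 0 < e ->
  s * u * (K * g) <= e * g ^ 2 + K ^ 2 * u ^ 2 / (4 * e).
Proof.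
move=> Hs He.
have E : e * g ^ 2 + K ^ 2 * u ^ 2 / (4 * e) - s * u * (K * g)
   = (2 * e * g - s * K * u) ^ 2 / (4 * e) + (1 - s * s) * K ^ 2 * u ^ 2 / (4 * e).
  field; lra.
rewrite Hs Rminus_diag Rmult_0_l Rmult_0_l /Rdiv Rmult_0_l Rplus_0_r in E.
have : 0 <= (2 * e * g - s * K * u) ^ 2 * / (4 * e).
  apply: Rmult_le_pos; first exact: pow2_ge_0.
  apply: Rlt_le; apply: Rinv_0_lt_compat; lra.
lra.
Qed.

Lemma young_vector (d : nat) (s uu e : R) (Kf g : 'I_d -> R) : s * s = 1 -> 0 < e ->
  s * uu * \big[Rplus/0]_(i : 'I_d) (Kf i * g i)
  <= e * \big[Rplus/0]_(i : 'I_d) g i ^ 2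
     + (\big[Rplus/0]_(i : 'I_d) Kf i ^ 2) * uu ^ 2 / (4 * e).
Proof.
move=> Hs He.
have -> : e * \big[Rplus/0]_(i : 'I_d) g i ^ 2
          + (\big[Rplus/0]_(i : 'I_d) Kf i ^ 2) * uu ^ 2 / (4 * e)
   = \big[Rplus/0]_(i : 'I_d) (e * g i ^ 2 + Kf i ^ 2 * uu ^ 2 / (4 * e)).
  by rewrite sumD sumZl; congr (_ + _); rewrite /Rdiv sumZr sumZr.
rewrite sumZl; apply: sum_le => i _; exact: young_signed.
Qed.

(* At a face point with weight P,
   normal sign s, value uu, eta = Jb |K_.f|^2 and Del = Delta D u, the
   indefinite flux term plus half the penalty dominates minus a fraction of
   the local gradient energy and minus a multiple of Del^2; the fractions
   are exactly those allowed by tau_H >= dd/hth and tau_R >= 1/hrt. *)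
Lemma face_point_bound (d : nat) (P s uu Jb eta m Del hth hrt dd tauH tauR : R)
    (Kf g : 'I_d -> R) :
  0 < P -> s * s = 1 -> 0 < Jb -> 0 < m -> 0 < hth -> 0 < hrt -> 0 < dd ->
  eta = Jb * \big[Rplus/0]_(i : 'I_d) Kf i ^ 2 ->
  tauH >= dd / hth -> tauR >= / hrt ->
  - (P * (s * uu * (Jb * \big[Rplus/0]_(i : 'I_d) (Kf i * g i) - eta * Del)))
  + / 2 * (P * (uu ^ 2 * (tauH * eta + tauR * eta ^ 2 / m)))
  >= - (P * (hth / (2 * dd) * (Jb * \big[Rplus/0]_(i : 'I_d) g i ^ 2)))
     - P * (hrt / 2 * m * Del ^ 2).
Proof.
move=> HP Hs HJb Hm Hth Hrt Hdd Heta HtH HtR.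
set e := hth / (2 * dd).
have He : 0 < e by rewrite /e; apply: Rdiv_lt_0_compat; lra.
have Bgrad := @young_vector d s uu e Kf g Hs He.
have Hs' : (- s) * (- s) = 1 by lra.
have He2 : 0 < hrt * m / 2 by apply: Rdiv_lt_0_compat; nra.
have Bdel := young_signed (- s) uu eta Del (hrt * m / 2) Hs' He2.
set SK := \big[Rplus/0]_(i : 'I_d) Kf i ^ 2 in Heta Bgrad.
set SKg := \big[Rplus/0]_(i : 'I_d) (Kf i * g i) in Bgrad *.
set Sg := \big[Rplus/0]_(i : 'I_d) g i ^ 2 in Bgrad *.
have Heta0 : 0 <= eta.
  rewrite Heta; apply: Rmult_le_pos; first lra.
  by rewrite /SK; apply: sum_ge0 => i _; apply: pow2_ge_0.
have E1 : / (4 * e) = dd / (2 * hth) by rewrite /e; field; lra.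
have F1 : 0 <= eta * uu ^ 2 * (tauH / 2 - / (4 * e)).
  rewrite E1; apply: Rmult_le_pos; first (apply: Rmult_le_pos => //; exact: pow2_ge_0).
  have : dd / (2 * hth) = (dd / hth) / 2 by field; lra.
  lra.
have E2 : eta ^ 2 * uu ^ 2 / (4 * (hrt * m / 2)) = eta ^ 2 * uu ^ 2 * (/ hrt / (2 * m)).
  by field; lra.
have F2 : 0 <= eta ^ 2 * uu ^ 2 * (tauR / (2 * m) - / hrt / (2 * m)).
  apply: Rmult_le_pos; first (apply: Rmult_le_pos; exact: pow2_ge_0).
  have -> : tauR / (2 * m) - / hrt / (2 * m) = (tauR - / hrt) / (2 * m) by field; lra.
  apply: Rmult_le_pos; [lra | apply: Rlt_le; apply: Rinv_0_lt_compat; lra].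
rewrite E2 in Bdel.
have Bgrad' := Rmult_le_compat_l _ _ _ (Rlt_le _ _ HJb) Bgrad.
suff : 0 <= - (s * uu * (Jb * SKg - eta * Del))
            + / 2 * (uu ^ 2 * (tauH * eta + tauR * eta ^ 2 / m))
            + e * (Jb * Sg) + hrt / 2 * m * Del ^ 2.
  move=> H; have := Rmult_le_compat_l _ _ _ (Rlt_le _ _ HP) H; lra.
rewrite Heta in Bgrad' F1 F2 Bdel *.
set W := / (4 * e) in Bgrad' F1.
have -> : tauR * (Jb * SK) ^ 2 / m = (Jb * SK) ^ 2 * (tauR / m) by field; lra.
set q1 := tauR / (2 * m) in F2; set q2 := / hrt / (2 * m) in F2 Bdel.
have -> : tauR / m = 2 * q1 by rewrite /q1; field; lra.
rewrite /Rdiv in Bgrad'; rewrite /W in F1; lra.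
Qed.

Lemma face_sums_combine (d N : nat) (P : face d -> pt d N -> bool) (F G : face d -> pt d N -> R) :
  - (\big[Rplus/0]_(f : face d) \big[Rplus/0]_(p : pt d N | P f p) F f p)
  + / 2 * (\big[Rplus/0]_(f : face d) \big[Rplus/0]_(p : pt d N | P f p) G f p)
  = \big[Rplus/0]_(f : face d) \big[Rplus/0]_(p : pt d N | P f p) (- F f p + / 2 * G f p).
Proof.
rewrite -sumN sumZl -sumD; apply: eq_bigr => f _.
by rewrite -sumN sumZl -sumD.
Qed.

Lemma face_sums_sub (d N : nat) (P : face d -> pt d N -> bool) (F G : face d -> pt d N -> R) :
  \big[Rplus/0]_(f : face d) \big[Rplus/0]_(p : pt d N | P f p) (- F f p - G f p)
  = - (\big[Rplus/0]_(f : face d) \big[Rplus/0]_(p : pt d N | P f p) F f p)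
    - (\big[Rplus/0]_(f : face d) \big[Rplus/0]_(p : pt d N | P f p) G f p).
Proof.
rewrite -sumN -sumB; apply: eq_bigr => f _.
by rewrite -sumN -sumB.
Qed.

Lemma quad_expand (T : finType) (M : T -> T -> R) u :
  quad M u = \big[Rplus/0]_(p : T) (u p * \big[Rplus/0]_(q : T) (M p q * u q)).
Proof. by apply: eq_bigr => p _; rewrite sumZl; apply: eq_bigr => q _; ring. Qed.

Section LineDecomposition.
Context {d N : nat}.
Variable Hx : 'I_N -> R.

Lemma quad_Rkk_by_lines Rxx k (c u : pt d N -> R) :
  quad (Rkk Hx Rxx k c) u =
  \big[Rplus/0]_(p : pt d N | nat_of_ord (p k) == 0%N)
     (Hperp Hx k p * quad (Rxx (fun m => c (upd p k m))) (fun m => u (upd p k m))).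
Proof.
rewrite quad_expand (sum_by_lines k); apply: eq_bigr => p _.
rewrite quad_expand sumZl; apply: eq_bigr => l _.
rewrite -/(mv _ u _) mv_Rkk Hperp_upd (upd_at p k l).
have -> : (fun m => c (upd (upd p k l) k m)) = (fun m => c (upd p k m)).
  by apply: functional_extensionality => m; rewrite upd_upd.
have -> : \big[Rplus/0]_(m < N) (Rxx (fun m => c (upd p k m)) l m * u (upd (upd p k l) k m))
   = \big[Rplus/0]_(m < N) (Rxx (fun m => c (upd p k m)) l m * u (upd p k m)).
  by apply: eq_bigr => m _; rewrite upd_upd.
set x := Hperp _ _ _; set y := \big[Rplus/0]_(m < N) _; ring.
Qed.

Lemma far_face_sum k (zN : 'I_N) (G : pt d N -> R) : nat_of_ord zN = N.-1 ->
  \big[Rplus/0]_(p : pt d N | onface (k, true) p) G p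
  = \big[Rplus/0]_(p : pt d N | nat_of_ord (p k) == 0%N) G (upd p k zN).
Proof.
move=> HzN; rewrite big_mkcond (sum_by_lines k); apply: eq_bigr => p _.
rewrite (bigD1 zN) //= /onface /= (upd_at p k zN) HzN eqxx big1 ?Rplus_0_r // => l ln.
rewrite (upd_at p k l); case: eqP => // E; case/negP: ln; apply/eqP; apply: val_inj.
by rewrite /= E HzN.
Qed.

End LineDecomposition.

Section Positivity.
Context {d N : nat}.
Variables (mb : nat) (tauH tauR : R) (Hx : 'I_N -> R).
Variables D Dh : 'I_N -> 'I_N -> R.
Variable Rxx : ('I_N -> R) -> 'I_N -> 'I_N -> R.
Variables Jm K : pt d N -> 'I_d -> 'I_d -> R.
Variables J a b : pt d N -> R.
Variable gamma : face d -> pt d N -> R.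
Variables h thetaH thetaR : R.
Hypothesis HxP : forall i, 0 < Hx i.
Hypothesis HxB : forall i : 'I_N,
  (nat_of_ord i == 0%N) || (nat_of_ord i == N.-1) -> Hx i = h * thetaH.
Hypothesis HJ : forall p, 0 < J p.
Hypothesis Hb : forall p, 0 < b p.
Hypothesis Hg : forall f p, onface f p -> 0 < gamma f p.
Hypothesis HJK : forall p i k,
  \big[Rplus/0]_(j : 'I_d) (Jm p i j * K p j k) = if i == k then 1 else 0.
Hypothesis HPR : forall c : 'I_N -> R, (forall l, 0 <= c l) -> forall u : 'I_N -> R,
     h * thetaR * cminL mb c * (eL (mv1 (fun x y => D x y - Dh x y) u)) ^ 2
     + h * thetaR * cminR mb c * (eR (mv1 (fun x y => D x y - Dh x y) u)) ^ 2
     <= quad (Rxx c) u.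
Hypothesis Hd : (1 <= d)%N.
Hypothesis Hmb : (1 <= mb)%N.
Hypothesis HmbN : (2 * mb <= N)%N.
Hypothesis Hh : 0 < h.
Hypothesis HtH : 0 < thetaH.
Hypothesis HtR : 0 < thetaR.
Hypothesis HtauH : tauH >= INR d / (h * thetaH).
Hypothesis HtauR : tauR >= / (h * thetaR).

Local Notation dD := (fun x y : 'I_N => D x y - Dh x y).

Lemma N_gt1 : (1 < N)%N.
Proof. by apply: leq_trans HmbN; rewrite -[2%N]muln1 leq_mul2l. Qed.

(* eta_k = J b |K_.k|^2 > 0: the k-th column of K cannot vanish since
   Jm K = I. *)
Lemma eta_pos k (p : pt d N) : 0 < etaF K J b k p.
Proof.
rewrite /etaF; apply: Rmult_lt_0_compat; last exact: Hb.
have Hge : 0 <= \big[Rplus/0]_(i : 'I_d) alpha K J i k i k p.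
  apply: sum_ge0 => i _; rewrite /alpha; have := HJ p; set x := K p i k; nra.
case: (Rle_lt_or_eq_dec _ _ Hge) => // E.
have H0 : forall i, alpha K J i k i k p = 0.
  move=> i; apply: (@sum_ge0_eq0 'I_d xpredT (fun i => alpha K J i k i k p)) => //.
  by move=> i0 _; rewrite /alpha; have := HJ p; set x := K p i0 k; nra.
have := HJK p k k; rewrite eqxx big1 => [|j _]; first lra.
have := H0 j; rewrite /alpha => Hj.
have HJp := HJ p.
have : K p j k = 0.
  case: (Rmult_integral _ _ Hj) => [/Rmult_integral [//|]|//]; lra.
by move=> ->; rewrite Rmult_0_r.
Qed.

Lemma etamin_pos k side (p : pt d N) : 0 < etamin mb K J b k side p.
Proof.
have N0 : (0 < N)%N by apply: leq_trans N_gt1.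
have NN : (N.-1 < N)%N by rewrite prednK.
rewrite /etamin; case: side; [rewrite /cminR | rewrite /cminL]; apply: seqmin_pos.
- apply: (@map_filter_nonnil _ _ _ (Ordinal NN)) => /=.
  by have := Hmb; have := N_gt1; lia.
- by move=> x /in_map_filter [i ->]; exact: eta_pos.
- exact: (@map_filter_nonnil _ _ _ (Ordinal N0)).
- by move=> x /in_map_filter [i ->]; exact: eta_pos.
Qed.

Lemma PR_direction_bound k (u : pt d N -> R) :
  \big[Rplus/0]_(side : bool) \big[Rplus/0]_(p : pt d N | onface (k, side) p)
     (Hperp Hx k p * (h * thetaR / 2 * etamin mb K J b k side p * (mv (kron1 k dD) u p) ^ 2))
  <= / 2 * quad (Rkk Hx Rxx k (etaF K J b k)) u.
Proof.
have NN : (N.-1 < N)%N by rewrite prednK //; apply: leq_trans N_gt1.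
set zN : 'I_N := Ordinal NN.
pose cl (p : pt d N) := fun m => etaF K J b k (upd p k m).
have Ecl : forall p l, (fun m => etaF K J b k (upd (upd p k l) k m)) = cl p.
  by move=> p l; apply: functional_extensionality => m; rewrite upd_upd.
rewrite quad_Rkk_by_lines sumZl sum_bool (@far_face_sum _ _ k zN _ (erefl N.-1)).
rewrite -sumD; apply: sum_le => p p0.
rewrite Hperp_upd /etamin Ecl -/(cl p).
have Hcl : forall l, 0 <= cl p l by move=> l; exact: (etaF_ge0 K J b HJ Hb).
have := HPR (cl p) Hcl (fun m => u (upd p k m)).
have HP := Hperp_pos Hx HxP k p.
have z0 : nat_of_ord (p k) = 0%N by apply/eqP.
rewrite (@eL_at _ _ _ z0) (@eR_at _ zN) //.
have -> : mv1 dD (fun m => u (upd p k m)) (p k) = mv (kron1 k dD) u p by rewrite mv_kron1.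
have -> : mv1 dD (fun m => u (upd p k m)) zN = mv (kron1 k dD) u (upd p k zN).
  rewrite mv_kron1 upd_at; apply: eq_bigr => l _; by rewrite upd_upd.
move=> HQ.
have := Rmult_le_compat_l _ _ _ (Rlt_le _ _ HP) HQ.
set A := cminL mb (cl p); set B := cminR mb (cl p); set Q := quad _ _.
set x := mv _ u p; set y := mv _ u (upd p k zN); set HH := Hperp _ _ _.
lra.
Qed.

Lemma gradient_energy_pointwise (u : pt d N -> R) :
  \big[Rplus/0]_(i : 'I_d) ipO Hx J (fun p => sqrt (b p) * Defs.Dx D K i u p)
                                   (fun p => sqrt (b p) * Defs.Dx D K i u p)
  = \big[Rplus/0]_(p : pt d N)
      (Hfull Hx p * (J p * b p * \big[Rplus/0]_(i : 'I_d) (Defs.Dx D K i u p) ^ 2)).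
Proof.
rewrite /ipO exchange_big; apply: eq_bigr => p _.
rewrite !sumZl; apply: eq_bigr => i _.
have E := sqrt_sqrt (b p) (Rlt_le _ _ (Hb p)).
set x := Defs.Dx D K i u p.
transitivity (Hfull Hx p * J p * x * x * (sqrt (b p) * sqrt (b p))); first ring.
rewrite E; ring.
Qed.

Lemma normal_flux_form (u : pt d N -> R) :
  ipG Hx gamma (fun f p => b p * mv (Dn D Dh K J gamma f) u p) (fun _ p => u p)
  = \big[Rplus/0]_(f : face d) \big[Rplus/0]_(p : pt d N | onface f p)
      (Hperp Hx f.1 p * (sgn f * u p *
         (J p * b p * \big[Rplus/0]_(i : 'I_d) (K p i f.1 * Defs.Dx D K i u p)
          - etaF K J b f.1 p * mv (kron1 f.1 dD) u p))).
Proof.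
apply: eq_bigr => f _; apply: eq_bigr => p Hp.
have g0 : gamma f p <> 0 by have := Hg f p Hp; lra.
transitivity (Hperp Hx f.1 p * u p * (b p * mv (Dn D Dh K J gamma f) u p * gamma f p)).
  set x := Hperp _ _ _; set y := mv _ u p; ring.
rewrite (Dn_flux D Dh K J b gamma) // (cc_eta K J b f.1).
have -> : \big[Rplus/0]_(k : 'I_d) (cc K J b f.1 k p * mv (kron1 k D) u p)
   = J p * b p * \big[Rplus/0]_(i : 'I_d) (K p i f.1 * Defs.Dx D K i u p).
  rewrite /Defs.Dx.
  transitivity (\big[Rplus/0]_(k : 'I_d) \big[Rplus/0]_(i : 'I_d)
      (J p * b p * K p i f.1 * K p i k * mv (kron1 k D) u p)).
    apply: eq_bigr => k _; rewrite /cc sumZr; apply: eq_bigr => i _; rewrite /alpha.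
    set x := mv _ u p; ring.
  rewrite exchange_big sumZl; apply: eq_bigr => i _.
  rewrite sumZl sumZl; apply: eq_bigr => k _; set x := mv _ u p; ring.
by move: (Hperp _ _ _) (sgn f) (u p) (_ - _) => x1 x2 x3 x4; ring.
Qed.

Lemma penalty_form (u : pt d N -> R) :
  ipG Hx gamma (fun f p => Apen mb tauH tauR K J b gamma f p * u p) (fun _ p => u p)
  = \big[Rplus/0]_(f : face d) \big[Rplus/0]_(p : pt d N | onface f p)
      (Hperp Hx f.1 p * (u p ^ 2 * (tauH * etaF K J b f.1 p
           + tauR * (etaF K J b f.1 p) ^ 2 / etamin mb K J b f.1 f.2 p))).
Proof.
apply: eq_bigr => f _; apply: eq_bigr => p Hp.
have g0 : gamma f p <> 0 by have := Hg f p Hp; lra.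
rewrite /Apen (bigD1 f.1) //= big1 ?Rplus_0_r.
  rewrite /nu eqxx.
  have -> : Rabs (if f.2 then 1 else -1) = 1.
    by case: (f.2); rewrite ?Rabs_R1 ?Rabs_Ropp ?Rabs_R1.
  set T := tauH * _ + _; set x := Hperp _ _ _; field => //.
by move=> k /negbTE kn; rewrite /nu kn Rabs_R0 Rmult_0_l.
Qed.

(* Since N >= 2, a grid point lies on at most one face per direction. *)
Lemma faces_through_point (p : pt d N) :
  \big[Rplus/0]_(f : face d) (if onface f p then 1 else 0) <= INR d.
Proof.
rewrite face_split -sum_const1; apply: sum_le => j _; rewrite sum_bool /onface /=.
have N1 := N_gt1.
case: eqP => E1; case: eqP => E2 //; try lra.
exfalso; have H : N.-1 = 0%N by rewrite -E1 E2.
move: N1 H; lia.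
Qed.

(* Face sums of a nonnegative density, with weight h theta_H / (2d), are
   bounded by half its volume integral: the boundary weights of H are
   h theta_H and every point is counted at most d times. *)
Lemma face_sum_by_volume (W : pt d N -> R) : (forall p, 0 <= W p) ->
  \big[Rplus/0]_(f : face d) \big[Rplus/0]_(p : pt d N | onface f p)
     (Hperp Hx f.1 p * (h * thetaH / (2 * INR d) * W p))
  <= / 2 * \big[Rplus/0]_(p : pt d N) (Hfull Hx p * W p).
Proof.
move=> HW.
have Hd0 : 0 < INR d by apply: lt_0_INR; apply/ltP.
transitivity (\big[Rplus/0]_(f : face d) \big[Rplus/0]_(p : pt d N)
     (if onface f p then Hfull Hx p * W p / (2 * INR d) else 0)).
  right; apply: eq_bigr => f _; rewrite big_mkcond; apply: eq_bigr => p _.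
  case E: (onface f p) => //.
  rewrite (Hfull_split Hx f.1 p) HxB; first (set HP := Hperp _ _ _; set WW := W p; field; lra).
  by move: E; rewrite /onface; case: (f.2) => ->; rewrite ?orbT.
rewrite exchange_big sumZl; apply: sum_le => p _.
transitivity (Hfull Hx p * W p / (2 * INR d) *
              \big[Rplus/0]_(f : face d) (if onface f p then 1 else 0)).
  right; rewrite sumZl; apply: eq_bigr => f _; case: (onface f p); ring.
have Hpos : 0 <= Hfull Hx p * W p / (2 * INR d).
  apply: Rmult_le_pos; first (apply: Rmult_le_pos; [exact: Rlt_le (Hfull_pos Hx HxP p) | exact: HW]).
  apply: Rlt_le; apply: Rinv_0_lt_compat; lra.
have := Rmult_le_compat_l _ _ _ Hpos (faces_through_point p).
have : Hfull Hx p * W p / (2 * INR d) * INR d = / 2 * (Hfull Hx p * W p) by field; lra.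
lra.
Qed.

Lemma PR_boundary_bound (u : pt d N -> R) :
  \big[Rplus/0]_(f : face d) \big[Rplus/0]_(p : pt d N | onface f p)
     (Hperp Hx f.1 p * (h * thetaR / 2 * etamin mb K J b f.1 f.2 p * (mv (kron1 f.1 dD) u p) ^ 2))
  <= / 2 * \big[Rplus/0]_(k : 'I_d) quad (Rkk Hx Rxx k (etaF K J b k)) u.
Proof. rewrite face_split sumZl; apply: sum_le => k _; exact: PR_direction_bound. Qed.

Lemma boundary_terms_bound (u : pt d N -> R) :
  - ipG Hx gamma (fun f p => b p * mv (Dn D Dh K J gamma f) u p) (fun _ p => u p)
  + / 2 * ipG Hx gamma (fun f p => Apen mb tauH tauR K J b gamma f p * u p) (fun _ p => u p)
  >= - (/ 2 * \big[Rplus/0]_(p : pt d N)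
          (Hfull Hx p * (J p * b p * \big[Rplus/0]_(i : 'I_d) (Defs.Dx D K i u p) ^ 2)))
     - / 2 * \big[Rplus/0]_(k : 'I_d) quad (Rkk Hx Rxx k (etaF K J b k)) u.
Proof.
have Hd0 : 0 < INR d by apply: lt_0_INR; apply/ltP.
have Hgrad := face_sum_by_volume
  (fun p => J p * b p * \big[Rplus/0]_(i : 'I_d) (Defs.Dx D K i u p) ^ 2).
have /Hgrad {}Hgrad : forall p,
    0 <= J p * b p * \big[Rplus/0]_(i : 'I_d) (Defs.Dx D K i u p) ^ 2.
  move=> p; apply: Rmult_le_pos; first exact: Rlt_le (Rmult_lt_0_compat _ _ (HJ p) (Hb p)).
  by apply: sum_ge0 => i _; apply: pow2_ge_0.
have HR := PR_boundary_bound u.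
rewrite normal_flux_form penalty_form face_sums_combine.
set Sgrad := \big[Rplus/0]_(f : face d) \big[Rplus/0]_(p : pt d N | onface f p)
  (Hperp Hx f.1 p * (h * thetaH / (2 * INR d) * _)) in Hgrad.
set SR := \big[Rplus/0]_(f : face d) \big[Rplus/0]_(p : pt d N | onface f p)
  (Hperp Hx f.1 p * (h * thetaR / 2 * _ * _)) in HR.
apply: (@Rge_trans _ (- Sgrad - SR)); last lra.
rewrite /Sgrad /SR -face_sums_sub; apply: Rle_ge; apply: sum_le => f _; apply: sum_le => p Hp.
apply: Rge_le; apply: face_point_bound.
- exact: Hperp_pos.
- by rewrite /sgn; case: (f.2); lra.
- exact: Rmult_lt_0_compat.
- exact: etamin_pos.
- exact: Rmult_lt_0_compat.
- exact: Rmult_lt_0_compat.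
- exact: Hd0.
- rewrite /etaF sumZr sumZl; apply: eq_bigr => i _; rewrite /alpha; ring.
- exact: HtauH.
- exact: HtauR.
Qed.

(* Second claim: E_D >= 0, since the boundary terms are absorbed by the
   gradient and R-energies and the kinetic energy is nonnegative. *)
Lemma energyD_nonneg (u ud : pt d N -> R) :
  0 <= energyD mb tauH tauR Hx D Dh Rxx K J a b gamma u ud.
Proof.
rewrite /energyD /energy gradient_energy_pointwise.
have Hkin : 0 <= ipO Hx J (fun p => sqrt (a p) * ud p) (fun p => sqrt (a p) * ud p).
  apply: sum_ge0 => p _.
  have := Rmult_le_pos _ _ (Rlt_le _ _ (Hfull_pos Hx HxP p)) (Rlt_le _ _ (HJ p)).
  have := Rle_0_sqr (sqrt (a p) * ud p); rewrite /Rsqr.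
  set x := sqrt (a p) * ud p; set y := Hfull Hx p; set z := J p; nra.
have := boundary_terms_bound u.
lra.
Qed.

End Positivity.

Arguments energyD_nonneg {d N mb tauH tauR Hx D Dh Rxx Jm K J a b gamma h thetaH thetaR}.

Lemma Hxi_pos {N s : nat} {h : R} {w : nat -> R} :
  0 < h -> (forall i : nat, (1 <= i <= s)%N -> 0 < w i) ->
  forall i : 'I_N, 0 < Hxi s h w i.
Proof.
move=> hpos Hw i; rewrite /Hxi; apply: Rmult_lt_0_compat => //.
case: ifP => H1; first (apply: Hw; lia).
case: ifP => H2; last lra.
apply: Hw; have := ltn_ord i; lia.
Qed.

Lemma Hxi_boundary {N s : nat} (h : R) (w : nat -> R) :
  (1 <= s)%N -> (2 * s <= N)%N ->
  forall i : 'I_N, (nat_of_ord i == 0%N) || (nat_of_ord i == N.-1) -> Hxi s h w i = h * w 1%N.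
Proof.
move=> Hs Hs2 i /orP [/eqP E|/eqP E]; rewrite /Hxi E.
  by have -> : (0 < s)%N by lia.
have -> : (N.-1 < s)%N = false by lia.
have -> : (N - s <= N.-1)%N by lia.
by have -> : (N - N.-1)%N = 1%N by lia.
Qed.

Theorem theorem1
  (d N mb s : nat) (h thetaR tauH tauR : R) (w : nat -> R)
  (D Dh : 'I_N -> 'I_N -> R) (Dxx Rxx : ('I_N -> R) -> 'I_N -> 'I_N -> R)
  (Jm K : pt d N -> 'I_d -> 'I_d -> R) (J a b : pt d N -> R)
  (gamma : face d -> pt d N -> R) :
  (* dimension, grid, spacing *)
  (1 <= d)%N ->
  (1 <= mb)%N -> (2 * mb <= N)%N ->
  h = / INR (N - 1)%N ->
  (* 1D norm H_xi = h diag(w_1..w_s,1..1,w_s..w_1), theta_H = w_1 *)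
  (1 <= s)%N -> (2 * s <= N)%N -> (forall i : nat, (1 <= i <= s)%N -> 0 < w i) ->
  let Hx := @Hxi N s h w in
  let thetaH := w 1%N in
  (* SBP property of D_xi *)
  (forall i j : 'I_N, Hx i * D i j + D j i * Hx j = sbpB i j) ->
  (* definition of D_xixi(c) through R_xixi(c) *)
  (forall (c : 'I_N -> R) (i j : 'I_N),
     Hx i * Dxx c i j =
       - (\big[Rplus/0]_(l : 'I_N) (D l i * Hx l * c l * D l j))
       - Rxx c i j
       - (if nat_of_ord i == 0%N then c i * Dh i j else 0)
       + (if nat_of_ord i == N.-1 then c i * Dh i j else 0)) ->
  (* R_xixi(c) linear in c *)
  (forall (c1 c2 : 'I_N -> R) (x : R) (i j : 'I_N),
     Rxx (fun l => x * c1 l + c2 l) i j = x * Rxx c1 i j + Rxx c2 i j) ->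
  (* R_xixi(c) symmetric positive semidefinite for c >= 0 *)
  (forall c : 'I_N -> R, (forall l, 0 <= c l) ->
     (forall i j, Rxx c i j = Rxx c j i) /\ (forall u : 'I_N -> R, 0 <= quad (Rxx c) u)) ->
  (* property (P_R) *)
  0 < thetaR ->
  (forall c : 'I_N -> R, (forall l, 0 <= c l) -> forall u : 'I_N -> R,
     h * thetaR * cminL mb c * (eL (mv1 (fun x y => D x y - Dh x y) u)) ^ 2
     + h * thetaR * cminR mb c * (eR (mv1 (fun x y => D x y - Dh x y) u)) ^ 2
     <= quad (Rxx c) u) ->
  (* geometry and coefficients at the grid points *)
  (forall p, J p = detR (Jm p)) ->
  (forall p, 0 < J p) ->
  (forall p i k, \big[Rplus/0]_(j : 'I_d) (Jm p i j * K p j k) = if i == k then 1 else 0) ->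
  (forall p, 0 < a p) ->
  (forall p, 0 < b p) ->
  (forall f p, onface f p -> 0 < gamma f p) ->
  (* penalty parameters *)
  tauH >= INR d / (h * thetaH) ->
  tauR >= / (h * thetaR) ->
  (* conclusion *)
  (forall (u v z : R -> pt d N -> R),
     (forall t p, derivable_pt_lim (fun r => u r p) t (v t p)) ->
     (forall t p, derivable_pt_lim (fun r => v r p) t (z t p)) ->
     (forall t p, J p * a p * z t p
                  = rhs mb tauH tauR Hx D Dh Dxx K J b gamma (u t) p) ->
     forall t, derivable_pt_lim
                 (fun r => energyD mb tauH tauR Hx D Dh Rxx K J a b gamma (u r) (v r)) t 0)
  /\
  (forall u ud : pt d N -> R,
     0 <= energyD mb tauH tauR Hx D Dh Rxx K J a b gamma u ud).
Proof.
move=> Hd Hmb HmbN Hh Hs Hs2 Hw Hx thetaH HD HDxx _ HRpsd HtR HPR _ HJ HJK Ha Hb Hg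
  HtauH HtauR.
have hpos : 0 < h.
  rewrite Hh; apply: Rinv_0_lt_compat; apply: lt_0_INR; apply/ltP; lia.
have HxP : forall i, 0 < Hx i := Hxi_pos hpos Hw.
have HxB := Hxi_boundary h w Hs Hs2.
have HRsym c (Hc : forall l, 0 <= c l) : forall i j, Rxx c i j = Rxx c j i.
  by case: (HRpsd c Hc).
have HtH : 0 < thetaH by apply: Hw.
split.
- exact: energyD_conserved HxP HD HDxx HRsym HJ Ha Hb Hg.
- exact: energyD_nonneg HxP HxB HJ Hb Hg HJK HPR Hd Hmb HmbN hpos HtH HtR HtauH HtauR.
Qed.
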